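(* Let $\mu,\phi$ satisfy $\phi''(x) = 1 - \int_{\mathbb{R}} \mu(\tfrac12 v^2 + \phi(x))\,dv$ and assumptions (i)–(iv) below, and let $q(x) = \int_{\mathbb{R}} \mu'(\tfrac12 v^2 + \phi(x))\,dv$. Then $u=\phi'$ is an eigenfunction with eigenvalue $0$ of the Dirichlet Sturm–Liouville problem $u''+(q+\lambda)u=0$, $u(0)=u(P_\phi)=0$, and it is the second eigenfunction. Consequently the smallest eigenvalue $\lambda_0$ of this problem satisfies $\lambda_0<0$, and its first eigenfunction $u_0$ satisfies $u_0(x) = u_0(P_\phi - x)$ and $u_0'(P_\phi-x) = -u_0'(x)$ for all $x\in[0,P_\phi]$; in particular $\psi = u_0u_0'$ satisfies $\psi(P_\phi - x) = -\psi(x)$.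
   Context: Assumptions: (i) $\mu\in C^1(\mathbb{R})$ is nonnegative; (ii) $\int_{\mathbb{R}} \mu(\tfrac12 v^2)\,dv = 1$; (iii) there are $\gamma>1$, $C>0$ with $|\mu'(y)| \le C/(1+|y|^\gamma)$ for all $y$; (iv) $\phi$ is nonconstant with minimal period $P_\phi$, and, writing $\phi_+ = \max\phi$, $\phi_- = \min\phi$, it is normalized so that $\phi(0)=\phi(P_\phi)=\phi_+$, $\phi(P_\phi/2) = \phi_-$, $\phi(x) = \phi(P_\phi - x)$ for all $x\in[0,P_\phi]$, and $\phi$ is strictly decreasing on $[0,P_\phi/2]$ (and strictly increasing on $[P_\phi/2,P_\phi]$ by symmetry). *)

From Stdlib Require Import Reals Lra.
Open Scope R_scope.

Definition improper_integral (f : R -> R) (l : R) : Prop :=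
  forall eps : R, eps > 0 ->
    exists M : R, forall a b : R, a <= - M -> M <= b ->
      exists pr : Riemann_integrable f a b, Rabs (RiemannInt pr - l) < eps.

(* |y|^g for real g > 0, with the convention 0^g = 0
   (Stdlib's Rpower is only meaningful for positive bases). *)
Definition abs_rpow (y g : R) : R :=
  if Req_EM_T y 0 then 0 else Rpower (Rabs y) g.

Definition SL_eigenpair (q : R -> R) (P lam : R) (u du : R -> R) : Prop :=
  (exists ddu : R -> R, forall x : R, 0 <= x <= P ->
      derivable_pt_lim u x (du x) /\ derivable_pt_lim du x (ddu x) /\
      ddu x + (q x + lam) * u x = 0) /\
  u 0 = 0 /\ u P = 0 /\
  (exists x : R, 0 <= x <= P /\ u x <> 0).

Definition SL_eigenvalue (q : R -> R) (P lam : R) : Prop :=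
  exists u du : R -> R, SL_eigenpair q P lam u du.

From Stdlib Require Import Reals Lra Lia Classical FunctionalExtensionality.
From Coquelicot Require Import Coquelicot.
Open Scope R_scope.

(* Differentiating the equation for [phi] under the integral sign shows that [u = phi']
   solves [u'' + q u = 0]; it is negative on (0, P/2), positive on (P/2, P) and vanishes at
   0, P/2, P.  The Dirichlet problem is studied by shooting: the solution of
   [u'' + (q + lam) u = 0], [u 0 = 0], [u' 0 = 1] depends continuously on [lam], takes negative
   values in (0, P) for [lam = 0] (it is a multiple of [phi']) but not for [lam] very negative,
   and the infimum of the [lam <= 0] for which it takes negative values is an eigenvalue [lam0 < 0] with a
   positive eigenfunction.  By Sturm comparison with [phi'], an eigenfunction for a negative
   eigenvalue has no interior zero (otherwise [phi'] would vanish on both sides of it), so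
   by Sturm comparison again there is only one negative eigenvalue.  As [q] is symmetric
   about P/2, [u0 (P - x)] is again an eigenfunction, hence a multiple of [u0], and the
   multiple is 1 because [u0 (P/2) <> 0]. *)

(** * Calculus on the real line *)

Lemma derivable_pt_lim_val f x l l' :
  derivable_pt_lim f x l -> l = l' -> derivable_pt_lim f x l'.
Proof. intros H <-; exact H. Qed.

Lemma derivable_pt_lim_cont f x l : derivable_pt_lim f x l -> continuity_pt f x.
Proof. intro H; apply derivable_continuous_pt; exists l; exact H. Qed.

Lemma derivable_pt_lim_reflect f x l :
  derivable_pt_lim f (- x) l -> derivable_pt_lim (fun y => f (- y)) x (- l).
Proof.
  intro H. apply (derivable_pt_lim_val _ _ (l * -1)); [|ring].
  apply (derivable_pt_lim_comp Ropp f); [|exact H].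
  apply (derivable_pt_lim_val _ _ (- 1)); [apply derivable_pt_lim_opp, derivable_pt_lim_id | ring].
Qed.

Lemma deriv_pos_right f x l : derivable_pt_lim f x l -> 0 < l ->
  exists d, 0 < d /\ forall h, 0 < h < d -> f x < f (x + h).
Proof.
  intros H Hl. destruct (H l Hl) as [d Hd]. exists d. split; [apply cond_pos|].
  intros h Hh. specialize (Hd h ltac:(lra) ltac:(rewrite Rabs_right; lra)).
  apply Rabs_def2 in Hd.
  assert (0 < (f (x + h) - f x) / h * h) by (apply Rmult_lt_0_compat; lra).
  replace (f (x + h)) with (f x + (f (x + h) - f x) / h * h) by (field; lra). lra.
Qed.

Lemma deriv_pos_left f x l : derivable_pt_lim f x l -> 0 < l ->
  exists d, 0 < d /\ forall h, 0 < h < d -> f (x - h) < f x.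
Proof.
  intros H Hl.
  assert (Hg : derivable_pt_lim (fun y => - f (- y)) (- x) l).
  { apply (derivable_pt_lim_val _ _ (- - l)); [|ring].
    apply derivable_pt_lim_opp, derivable_pt_lim_reflect. rewrite Ropp_involutive; exact H. }
  destruct (deriv_pos_right _ _ _ Hg Hl) as [d [Hd Hf]].
  exists d; split; [exact Hd|]. intros h Hh; specialize (Hf h Hh).
  rewrite Ropp_involutive in Hf. replace (- (- x + h)) with (x - h) in Hf by ring. lra.
Qed.

Lemma deriv_neg_right f x l : derivable_pt_lim f x l -> l < 0 ->
  exists d, 0 < d /\ forall h, 0 < h < d -> f (x + h) < f x.
Proof.
  intros H Hl. destruct (deriv_pos_right (fun y => - f y) x (- l)) as [d [Hd Hf]];
    [apply derivable_pt_lim_opp, H | lra |].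
  exists d; split; [exact Hd|]. intros h Hh; specialize (Hf h Hh); lra.
Qed.

Lemma deriv_neg_left f x l : derivable_pt_lim f x l -> l < 0 ->
  exists d, 0 < d /\ forall h, 0 < h < d -> f x < f (x - h).
Proof.
  intros H Hl. destruct (deriv_pos_left (fun y => - f y) x (- l)) as [d [Hd Hf]];
    [apply derivable_pt_lim_opp, H | lra |].
  exists d; split; [exact Hd|]. intros h Hh; specialize (Hf h Hh); lra.
Qed.

Lemma Rmin_half_pos d d' : 0 < d -> 0 < d' -> 0 < Rmin d d' / 2 < d /\ Rmin d d' / 2 < d'.
Proof. intros; unfold Rmin; destruct (Rle_dec d d'); lra. Qed.

Lemma deriv_nonneg_right f x l : derivable_pt_lim f x l ->
  (exists d, 0 < d /\ forall h, 0 < h < d -> f x <= f (x + h)) -> 0 <= l.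
Proof.
  intros H [d [Hd Hf]]. apply Rnot_lt_le; intro Hl.
  destruct (deriv_neg_right f x l H Hl) as [d' [Hd' Hf']].
  destruct (Rmin_half_pos d d' Hd Hd') as [H1 H2].
  specialize (Hf _ H1); specialize (Hf' (Rmin d d' / 2) ltac:(lra)); lra.
Qed.

Lemma deriv_nonpos_right f x l : derivable_pt_lim f x l ->
  (exists d, 0 < d /\ forall h, 0 < h < d -> f (x + h) <= f x) -> l <= 0.
Proof.
  intros H [d [Hd Hf]]. apply Rnot_lt_le; intro Hl.
  destruct (deriv_pos_right f x l H Hl) as [d' [Hd' Hf']].
  destruct (Rmin_half_pos d d' Hd Hd') as [H1 H2].
  specialize (Hf _ H1); specialize (Hf' (Rmin d d' / 2) ltac:(lra)); lra.
Qed.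

Lemma deriv_nonneg_left f x l : derivable_pt_lim f x l ->
  (exists d, 0 < d /\ forall h, 0 < h < d -> f (x - h) <= f x) -> 0 <= l.
Proof.
  intros H [d [Hd Hf]]. apply Rnot_lt_le; intro Hl.
  destruct (deriv_neg_left f x l H Hl) as [d' [Hd' Hf']].
  destruct (Rmin_half_pos d d' Hd Hd') as [H1 H2].
  specialize (Hf _ H1); specialize (Hf' (Rmin d d' / 2) ltac:(lra)); lra.
Qed.

Lemma deriv_nonpos_left f x l : derivable_pt_lim f x l ->
  (exists d, 0 < d /\ forall h, 0 < h < d -> f x <= f (x - h)) -> l <= 0.
Proof.
  intros H [d [Hd Hf]]. apply Rnot_lt_le; intro Hl.
  destruct (deriv_pos_left f x l H Hl) as [d' [Hd' Hf']].
  destruct (Rmin_half_pos d d' Hd Hd') as [H1 H2].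
  specialize (Hf _ H1); specialize (Hf' (Rmin d d' / 2) ltac:(lra)); lra.
Qed.

Lemma deriv_local_max f x l a b : derivable_pt_lim f x l -> a < x < b ->
  (forall y, a < y < b -> f y <= f x) -> l = 0.
Proof.
  intros H Hx Hm. apply Rle_antisym.
  - apply (deriv_nonpos_right f x l H). exists (b - x); split; [lra|].
    intros h Hh; apply Hm; lra.
  - apply (deriv_nonneg_left f x l H). exists (x - a); split; [lra|].
    intros h Hh; apply Hm; lra.
Qed.

Lemma deriv_local_min f x l a b : derivable_pt_lim f x l -> a < x < b ->
  (forall y, a < y < b -> f x <= f y) -> l = 0.
Proof.
  intros H Hx Hm.
  enough (- l = 0) by lra.
  apply (deriv_local_max (fun y => - f y) x (- l) a b); [apply derivable_pt_lim_opp, H | exact Hx |].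
  intros y Hy; specialize (Hm y Hy); lra.
Qed.

Lemma nondecreasing_of_deriv_nonneg f f' a b :
  (forall x, a <= x <= b -> derivable_pt_lim f x (f' x)) ->
  (forall x, a <= x <= b -> 0 <= f' x) ->
  forall x y, a <= x -> x <= y -> y <= b -> f x <= f y.
Proof.
  intros Hd Hp x y Hx Hxy Hy. destruct (Req_dec x y) as [->|Hne]; [lra|].
  destruct (MVT_cor2 f f' x y ltac:(lra)) as [c [Hc1 Hc2]]; [intros c Hc; apply Hd; lra|].
  assert (0 <= f' c * (y - x)) by (apply Rmult_le_pos; [apply Hp; lra | lra]). lra.
Qed.

Lemma nonincreasing_of_deriv_nonpos f f' a b :
  (forall x, a <= x <= b -> derivable_pt_lim f x (f' x)) ->
  (forall x, a <= x <= b -> f' x <= 0) ->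
  forall x y, a <= x -> x <= y -> y <= b -> f y <= f x.
Proof.
  intros Hd Hp x y Hx Hxy Hy.
  enough (- f x <= - f y) by lra.
  apply (nondecreasing_of_deriv_nonneg (fun z => - f z) (fun z => - f' z) a b); auto.
  - intros z Hz. apply derivable_pt_lim_opp; auto.
  - intros z Hz. specialize (Hp z Hz). lra.
Qed.

Lemma cont_pos_near f x : continuity_pt f x -> 0 < f x ->
  exists al, 0 < al /\ forall y, Rabs (y - x) < al -> 0 < f y.
Proof.
  intros Hc Hp. destruct (Hc (f x) Hp) as [al [Hal H]].
  exists al. split; [exact Hal|]. intros y Hy.
  destruct (Req_dec y x) as [->|Hyx]; [exact Hp|].
  assert (Hd : Rabs (f y - f x) < f x) by (apply H; repeat split; auto).
  apply Rabs_def2 in Hd. lra.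
Qed.

Lemma cont_nonzero_near f x : continuity_pt f x -> f x <> 0 ->
  exists al, 0 < al /\ forall y, Rabs (y - x) < al -> f y <> 0.
Proof.
  intros Hc Hne.
  destruct (cont_pos_near (fun y => Rabs (f y)) x) as [al [Hal H]].
  - apply (continuity_pt_comp f Rabs); [exact Hc | apply Rcontinuity_abs].
  - apply Rabs_pos_lt, Hne.
  - exists al; split; [exact Hal|]. intros y Hy E.
    specialize (H y Hy). rewrite E, Rabs_R0 in H. lra.
Qed.

Lemma cont_nonneg_closure v a b c : a < b -> a <= c <= b -> continuity_pt v c ->
  (forall x, a < x < b -> 0 <= v x) -> 0 <= v c.
Proof.
  intros Hab Hc Hcont Hpos. apply Rnot_lt_le; intro Hneg.
  destruct (cont_pos_near (fun y => - v y) c) as [al [Hal H]];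
    [apply continuity_pt_opp, Hcont | lra |].
  set (s := Rmin 1 (al / (2 * (b - a)))).
  assert (Hs : 0 < s <= 1 /\ s * (b - a) < al).
  { assert (0 < al / (2 * (b - a))) by (apply Rdiv_lt_0_compat; lra).
    assert (al / (2 * (b - a)) * (b - a) = al / 2) by (field; lra).
    assert (s <= al / (2 * (b - a))) by apply Rmin_r.
    split; [unfold s; split; [apply Rmin_pos | apply Rmin_l]; lra|].
    apply Rle_lt_trans with (al / (2 * (b - a)) * (b - a)); [apply Rmult_le_compat_r|]; lra. }
  set (t := c + s * ((a + b) / 2 - c)).
  assert (Ht : a < t < b) by (unfold t; nra).
  assert (Htc : Rabs (t - c) < al).
  { unfold t. replace (c + s * ((a + b) / 2 - c) - c) with (s * ((a + b) / 2 - c)) by ring.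
    rewrite Rabs_mult, Rabs_right by lra. apply Rle_lt_trans with (s * (b - a)); [|lra].
    apply Rmult_le_compat_l; [lra|]. apply Rabs_le; lra. }
  specialize (H t Htc). specialize (Hpos t Ht). lra.
Qed.

Lemma IVT_strict f x y : x <= y -> (forall c, x <= c <= y -> continuity_pt f c) ->
  f x * f y < 0 -> exists z, x < z < y /\ f z = 0.
Proof.
  intros Hxy Hc Hs.
  assert (Hx0 : f x <> 0) by (intro E; rewrite E in Hs; lra).
  assert (Hy0 : f y <> 0) by (intro E; rewrite E in Hs; lra).
  assert (Hlt : x < y) by (destruct (Req_dec x y) as [<-|]; [nra | lra]).
  assert (Hfin : forall z, x <= z <= y -> f z = 0 -> exists z, x < z < y /\ f z = 0).
  { intros z Hz Ez. exists z. split; [|exact Ez]. split.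
    - destruct (Req_dec x z) as [<-|]; [contradiction | lra].
    - destruct (Req_dec z y) as [->|]; [contradiction | lra]. }
  destruct (Rlt_or_le (f x) 0) as [Hx|Hx].
  - destruct (Ranalysis5.IVT_interv f x y Hc Hlt Hx ltac:(nra)) as [z [Hz Ez]]. exact (Hfin z Hz Ez).
  - destruct (Ranalysis5.IVT_interv (fun t => - f t) x y) as [z [Hz Ez]]; try lra; [| nra |].
    + intros c Hc'. apply continuity_pt_opp, Hc, Hc'.
    + apply (Hfin z Hz). lra.
Qed.

Lemma const_sign_of_nonzero f a b : a < b -> (forall x, a <= x <= b -> continuity_pt f x) ->
  (forall x, a < x < b -> f x <> 0) ->
  (forall x, a < x < b -> 0 < f x) \/ (forall x, a < x < b -> f x < 0).
Proof.
  intros Hab Hc Hnz. set (m := (a + b) / 2).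
  assert (Hm : a < m < b) by (unfold m; lra).
  assert (Hsame : forall x, a < x < b -> 0 <= f x * f m).
  { intros x Hx. apply Rnot_lt_le; intro Hs.
    destruct (Rle_or_lt x m) as [Hxm|Hxm].
    - destruct (IVT_strict f x m Hxm) as [z [Hz Ez]];
        [intros c Hc'; apply Hc; lra | exact Hs | apply (Hnz z); [lra | exact Ez]].
    - destruct (IVT_strict f m x) as [z [Hz Ez]];
        [lra | intros c Hc'; apply Hc; lra | rewrite Rmult_comm; exact Hs |].
      apply (Hnz z); [lra | exact Ez]. }
  pose proof (Hnz m Hm) as Hfm.
  destruct (Rlt_or_le 0 (f m)) as [Hpos|Hneg]; [left | right]; intros x Hx;
    specialize (Hsame x Hx); specialize (Hnz x Hx).
  - destruct (Rtotal_order 0 (f x)) as [|[E|]]; [lra | symmetry in E; contradiction | nra].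
  - destruct (Rtotal_order 0 (f x)) as [|[E|]]; [nra | symmetry in E; contradiction | lra].
Qed.

(* The Stdlib rules restated on explicit [fun y => ...] terms, which [apply] can match
   (it does not unfold [plus_fct], [mult_fct], ...). *)
Lemma dlim_plus f g x lf lg : derivable_pt_lim f x lf -> derivable_pt_lim g x lg ->
  derivable_pt_lim (fun y => f y + g y) x (lf + lg).
Proof. exact (derivable_pt_lim_plus f g x lf lg). Qed.

Lemma dlim_minus f g x lf lg : derivable_pt_lim f x lf -> derivable_pt_lim g x lg ->
  derivable_pt_lim (fun y => f y - g y) x (lf - lg).
Proof. exact (derivable_pt_lim_minus f g x lf lg). Qed.

Lemma dlim_mult f g x lf lg : derivable_pt_lim f x lf -> derivable_pt_lim g x lg ->
  derivable_pt_lim (fun y => f y * g y) x (lf * g x + f x * lg).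
Proof. exact (derivable_pt_lim_mult f g x lf lg). Qed.

Lemma dlim_scal c f x lf : derivable_pt_lim f x lf ->
  derivable_pt_lim (fun y => c * f y) x (c * lf).
Proof. exact (derivable_pt_lim_scal f c x lf). Qed.

Lemma dlim_exp_affine k x0 x :
  derivable_pt_lim (fun y => exp (k * (y - x0))) x (k * exp (k * (x - x0))).
Proof. apply is_derive_Reals. auto_derive; [exact I | rewrite Rmult_1_r; reflexivity]. Qed.

Lemma glb_exists (E : R -> Prop) b : (forall x, E x -> b <= x) -> (exists x, E x) ->
  exists l, (forall x, E x -> l <= x) /\ (forall b', (forall x, E x -> b' <= x) -> b' <= l).
Proof.
  intros Hb [x0 Hx0].
  destruct (completeness (fun y => E (- y))) as [L [Hub Hlub]].
  - exists (- b). intros y Hy. specialize (Hb _ Hy). lra.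
  - exists (- x0). rewrite Ropp_involutive. exact Hx0.
  - exists (- L). split.
    + intros x Hx. enough (- x <= L) by lra. apply Hub. rewrite Ropp_involutive. exact Hx.
    + intros b' Hb'. enough (L <= - b') by lra. apply Hlub. intros y Hy. specialize (Hb' _ Hy). lra.
Qed.

Lemma first_zero f a z eta : a < z -> (forall x, a <= x <= z -> continuity_pt f x) ->
  f z = 0 -> 0 < eta -> (forall x, a < x < a + eta -> f x <> 0) ->
  exists z1, a < z1 <= z /\ f z1 = 0 /\ forall x, a < x < z1 -> f x <> 0.
Proof.
  intros Haz Hc Hfz Heta Hnear.
  set (E := fun y => a < y <= z /\ f y = 0).
  assert (HZ : forall x, E x -> a + eta <= x).
  { intros x [Hx Ex]. apply Rnot_lt_le; intro Hl. exact (Hnear x (conj (proj1 Hx) Hl) Ex). }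
  destruct (glb_exists E (a + eta) HZ) as [l [Hlb Hglb]]; [exists z; split; [lra | exact Hfz]|].
  assert (Hl : a + eta <= l <= z) by (split; [apply Hglb, HZ | apply Hlb; split; [lra | exact Hfz]]).
  exists l. split; [lra|]. split.
  - apply NNPP; intro Hnz.
    destruct (cont_nonzero_near f l (Hc l ltac:(lra)) Hnz) as [al [Hal Hnz2]].
    enough (l + al / 2 <= l) by lra.
    apply Hglb. intros y Hy. pose proof (Hlb y Hy) as Hly. destruct Hy as [_ Ey].
    apply Rnot_lt_le; intro Hlt. apply (Hnz2 y); [apply Rabs_def1; lra | exact Ey].
  - intros x Hx Ex. assert (l <= x) by (apply Hlb; split; [lra | exact Ex]). lra.
Qed.

Lemma last_zero f z b eta : z < b -> (forall x, z <= x <= b -> continuity_pt f x) ->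
  f z = 0 -> 0 < eta -> (forall x, b - eta < x < b -> f x <> 0) ->
  exists z2, z <= z2 < b /\ f z2 = 0 /\ forall x, z2 < x < b -> f x <> 0.
Proof.
  intros Hzb Hc Hfz Heta Hnear.
  destruct (first_zero (fun x => f (- x)) (- b) (- z) eta) as [z1 [Hz1 [Hz1b Hz1c]]]; try lra.
  - intros x Hx. apply (continuity_pt_comp Ropp f).
    + apply continuity_pt_opp, continuity_pt_id.
    + apply Hc. lra.
  - rewrite Ropp_involutive. exact Hfz.
  - intros x Hx. apply Hnear. lra.
  - exists (- z1). split; [lra|]. split; [exact Hz1b|]. intros x Hx E.
    apply (Hz1c (- x)); [lra | rewrite Ropp_involutive; exact E].
Qed.

Lemma simple_zero_isolated f x l : derivable_pt_lim f x l -> f x = 0 -> l <> 0 ->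
  exists eta, 0 < eta /\ (forall y, x < y < x + eta -> f y <> 0) /\
                         (forall y, x - eta < y < x -> f y <> 0).
Proof.
  intros H Hf Hl.
  assert (Hside : exists d1 d2, 0 < d1 /\ 0 < d2 /\
     (forall h, 0 < h < d1 -> f (x + h) <> 0) /\ (forall h, 0 < h < d2 -> f (x - h) <> 0)).
  { destruct (Rlt_or_le 0 l) as [Hp|Hn].
    - destruct (deriv_pos_right f x l H Hp) as [d1 [Hd1 H1]].
      destruct (deriv_pos_left f x l H Hp) as [d2 [Hd2 H2]].
      exists d1, d2. repeat split; try assumption;
        intros h Hh; [specialize (H1 h Hh) | specialize (H2 h Hh)]; lra.
    - destruct (deriv_neg_right f x l H ltac:(lra)) as [d1 [Hd1 H1]].
      destruct (deriv_neg_left f x l H ltac:(lra)) as [d2 [Hd2 H2]].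
      exists d1, d2. repeat split; try assumption;
        intros h Hh; [specialize (H1 h Hh) | specialize (H2 h Hh)]; lra. }
  destruct Hside as [d1 [d2 [Hd1 [Hd2 [H1 H2]]]]].
  assert (Hm1 := Rmin_l d1 d2). assert (Hm2 := Rmin_r d1 d2).
  exists (Rmin d1 d2). split; [apply Rmin_pos; assumption|]. split; intros y Hy.
  - replace y with (x + (y - x)) by ring. apply H1. lra.
  - replace y with (x - (x - y)) by ring. apply H2. lra.
Qed.

(** * Linear second-order equations *)

Lemma two_mul_le_sq_sum w z t k : Rabs t <= k -> 2 * w * z * t <= k * (w * w + z * z).
Proof.
  intros H. apply Rabs_le_between in H.
  assert (0 <= k * ((w - z) * (w - z))) by (apply Rmult_le_pos; [lra | apply Rle_0_sqr]).
  assert (0 <= k * ((w + z) * (w + z))) by (apply Rmult_le_pos; [lra | apply Rle_0_sqr]).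
  destruct (Rle_or_lt 0 (w * z)).
  - assert (0 <= (k - t) * (w * z)) by (apply Rmult_le_pos; lra). nra.
  - assert (0 <= (k + t) * (- (w * z))) by (apply Rmult_le_pos; lra). nra.
Qed.

Lemma bounded_on_segment f a b : a <= b -> (forall x, a <= x <= b -> continuity_pt f x) ->
  exists K, 0 <= K /\ forall x, a <= x <= b -> Rabs (f x) <= K.
Proof.
  intros Hab Hc. destruct (continuity_ab_maj (fun x => Rabs (f x)) a b Hab) as [xm [Hm _]].
  - intros c Hc'. apply (continuity_pt_comp f Rabs); [apply Hc, Hc' | apply Rcontinuity_abs].
  - exists (Rabs (f xm)). split; [apply Rabs_pos | exact Hm].
Qed.

(* Gronwall's inequality, with [(E + c/K) exp (-K (y - a))] as the nonincreasing quantity. *)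
Lemma gronwall E E' K c a b : 0 < K -> 0 <= c ->
  (forall y, a <= y <= b -> derivable_pt_lim E y (E' y)) ->
  (forall y, a <= y <= b -> E' y <= K * E y + c) -> E a <= 0 ->
  forall x, a <= x <= b -> E x <= c / K * exp (K * (x - a)).
Proof.
  intros HK Hc HE HE' Ha x Hx.
  set (F := fun y => (E y + c / K) * exp (- K * (y - a))).
  assert (HF : forall y, a <= y <= b ->
    derivable_pt_lim F y ((E' y - K * E y - c) * exp (- K * (y - a)))).
  { intros y Hy. eapply derivable_pt_lim_val.
    - apply dlim_mult; [apply dlim_plus; [apply HE, Hy | apply derivable_pt_lim_const]
                      | apply dlim_exp_affine].
    - cbv beta. field; lra. }
  assert (HFx : F x <= F a).
  { apply (nonincreasing_of_deriv_nonpos F _ a b HF); try lra.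
    intros y Hy. specialize (HE' y Hy).
    assert (0 < exp (- K * (y - a))) by apply exp_pos. nra. }
  unfold F in HFx. rewrite Rminus_diag, Rmult_0_r, exp_0, Rmult_1_r in HFx.
  assert (Hinv : exp (- K * (x - a)) * exp (K * (x - a)) = 1).
  { rewrite <- exp_plus. replace (- K * (x - a) + K * (x - a)) with 0 by ring. apply exp_0. }
  assert (0 < exp (K * (x - a))) by apply exp_pos.
  assert (0 <= c / K) by (apply Rle_mult_inv_pos; lra).
  assert (Hm : (E x + c / K) * exp (- K * (x - a)) * exp (K * (x - a))
               <= (E a + c / K) * exp (K * (x - a))) by (apply Rmult_le_compat_r; lra).
  rewrite Rmult_assoc, Hinv, Rmult_1_r in Hm. nra.
Qed.

Definition ode_sol (Q : R -> R) (a b : R) (u du : R -> R) : Prop :=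
  forall x, a <= x <= b ->
    derivable_pt_lim u x (du x) /\ derivable_pt_lim du x (- (Q x * u x)).

Lemma ode_sol_cont Q a b u du : ode_sol Q a b u du ->
  forall x, a <= x <= b -> continuity_pt u x.
Proof. intros H x Hx. exact (derivable_pt_lim_cont _ _ _ (proj1 (H x Hx))). Qed.

Lemma ode_sol_cont_deriv Q a b u du : ode_sol Q a b u du ->
  forall x, a <= x <= b -> continuity_pt du x.
Proof. intros H x Hx. exact (derivable_pt_lim_cont _ _ _ (proj2 (H x Hx))). Qed.

Lemma ode_sol_restrict Q a b a' b' u du : ode_sol Q a b u du -> a <= a' -> b' <= b ->
  ode_sol Q a' b' u du.
Proof. intros H H1 H2 x Hx. apply H. lra. Qed.

Lemma ode_sol_ext Q Q' a b u du : ode_sol Q a b u du ->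
  (forall x, a <= x <= b -> Q x = Q' x) -> ode_sol Q' a b u du.
Proof. intros H HQ x Hx. rewrite <- HQ by exact Hx. exact (H x Hx). Qed.

Lemma ode_sol_opp Q a b u du : ode_sol Q a b u du ->
  ode_sol Q a b (fun y => - u y) (fun y => - du y).
Proof.
  intros H y Hy. destruct (H y Hy) as [H1 H2]. split.
  - apply derivable_pt_lim_opp, H1.
  - eapply derivable_pt_lim_val; [apply derivable_pt_lim_opp, H2 | ring].
Qed.

Lemma ode_sol_lincomb Q a b u du v dv c : ode_sol Q a b u du -> ode_sol Q a b v dv ->
  ode_sol Q a b (fun x => u x - c * v x) (fun x => du x - c * dv x).
Proof.
  intros Hu Hv x Hx. destruct (Hu x Hx), (Hv x Hx). split.
  - apply dlim_minus; [|apply dlim_scal]; assumption.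
  - eapply derivable_pt_lim_val; [apply dlim_minus; [|apply dlim_scal]; eassumption | ring].
Qed.

(* The energy [u^2 + du^2] satisfies [|E'| <= K E], so it vanishes once it vanishes at one point. *)
Lemma ode_sol_zero Q a b u du x0 : (forall x, a <= x <= b -> continuity_pt Q x) ->
  ode_sol Q a b u du -> a <= x0 <= b -> u x0 = 0 -> du x0 = 0 ->
  forall x, a <= x <= b -> u x = 0 /\ du x = 0.
Proof.
  intros HQ Hs Hx0 Hu0 Hdu0.
  destruct (bounded_on_segment Q a b ltac:(lra) HQ) as [K0 [HK0 HK]].
  set (K := K0 + 1).
  set (E := fun y => u y * u y + du y * du y).
  set (E' := fun y => 2 * u y * du y * (1 - Q y)).
  assert (HE : forall y, a <= y <= b -> derivable_pt_lim E y (E' y)).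
  { intros y Hy. destruct (Hs y Hy) as [H1 H2].
    eapply derivable_pt_lim_val; [apply dlim_plus; apply dlim_mult; eassumption | cbv beta; unfold E'; ring]. }
  assert (HEb : forall y, a <= y <= b -> E' y <= K * E y /\ - E' y <= K * E y).
  { intros y Hy. specialize (HK y Hy).
    assert (Ht : Rabs (1 - Q y) <= K).
    { apply Rabs_le_between in HK. apply Rabs_le_between. unfold K. lra. }
    split; unfold E, E'.
    - apply two_mul_le_sq_sum, Ht.
    - replace (- (2 * u y * du y * (1 - Q y))) with (2 * u y * du y * (- (1 - Q y))) by ring.
      apply two_mul_le_sq_sum. rewrite Rabs_Ropp. exact Ht. }
  assert (HE0 : E x0 <= 0) by (unfold E; rewrite Hu0, Hdu0; lra).
  intros x Hx. enough (E x <= 0) by (unfold E in *; split; nra).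
  destruct (Rle_or_lt x0 x) as [Hle|Hlt].
  - assert (G : E x <= 0 / K * exp (K * (x - x0))).
    { apply (gronwall E E' K 0 x0 b); try (unfold K; lra).
      - intros y Hy. apply HE. lra.
      - intros y Hy. rewrite Rplus_0_r. apply HEb. lra. }
    unfold Rdiv in G. rewrite !Rmult_0_l in G. exact G.
  - assert (G : E (- - x) <= 0 / K * exp (K * (- x - - x0))).
    { apply (gronwall (fun y => E (- y)) (fun y => - E' (- y)) K 0 (- x0) (- a));
        try (unfold K; lra); [| | rewrite Ropp_involutive; exact HE0].
      - intros y Hy. apply derivable_pt_lim_reflect, HE. lra.
      - intros y Hy. rewrite Rplus_0_r. apply HEb. lra. }
    unfold Rdiv in G. rewrite !Rmult_0_l, Ropp_involutive in G. exact G.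
Qed.

Lemma ode_sol_close Q1 Q2 a b u1 du1 u2 du2 K0 B d :
  ode_sol Q1 a b u1 du1 -> ode_sol Q2 a b u2 du2 -> u1 a = u2 a -> du1 a = du2 a ->
  0 <= K0 -> (forall x, a <= x <= b -> Rabs (Q1 x) <= K0) ->
  (forall x, a <= x <= b -> Rabs (u2 x) <= B) ->
  0 <= d <= 1 -> (forall x, a <= x <= b -> Rabs (Q1 x - Q2 x) <= d) ->
  forall x, a <= x <= b ->
    (u1 x - u2 x) * (u1 x - u2 x) + (du1 x - du2 x) * (du1 x - du2 x)
    <= d * (B * B) * exp ((K0 + 2) * (b - a)).
Proof.
  intros H1 H2 Ha Hda HK0 HK HB Hd Hdiff x Hx.
  set (K := K0 + 2).
  set (E := fun y => (u1 y - u2 y) * (u1 y - u2 y) + (du1 y - du2 y) * (du1 y - du2 y)).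
  set (E' := fun y => 2 * (u1 y - u2 y) * (du1 y - du2 y)
                      + 2 * (du1 y - du2 y) * (- (Q1 y * u1 y) + Q2 y * u2 y)).
  assert (HE : forall y, a <= y <= b -> derivable_pt_lim E y (E' y)).
  { intros y Hy. destruct (H1 y Hy), (H2 y Hy).
    eapply derivable_pt_lim_val;
      [apply dlim_plus; apply dlim_mult; apply dlim_minus; eassumption | cbv beta; unfold E'; ring]. }
  assert (HEb : forall y, a <= y <= b -> E' y <= K * E y + d * (B * B)).
  { intros y Hy. specialize (HK y Hy). specialize (HB y Hy). specialize (Hdiff y Hy).
    unfold E, E'. set (w := u1 y - u2 y). set (z := du1 y - du2 y). set (e := Q1 y - Q2 y).
    replace (- (Q1 y * u1 y) + Q2 y * u2 y) with (- (Q1 y * w) - e * u2 y) by (unfold w, e; ring).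
    assert (T1 : 2 * w * z * (1 - Q1 y) <= (K0 + 1) * (w * w + z * z)).
    { apply two_mul_le_sq_sum. apply Rabs_le_between in HK. apply Rabs_le_between. lra. }
    assert (T2 : 2 * z * u2 y * (- e) <= d * (z * z + u2 y * u2 y)).
    { apply two_mul_le_sq_sum. rewrite Rabs_Ropp. exact Hdiff. }
    assert (u2 y * u2 y <= B * B).
    { pose proof (Rabs_pos (u2 y)).
      replace (u2 y * u2 y) with (Rabs (u2 y) * Rabs (u2 y))
        by (rewrite <- Rabs_mult; apply Rabs_right; nra). nra. }
    assert (0 <= w * w) by nra. assert (0 <= z * z) by nra.
    unfold K. nra. }
  assert (HEa : E a <= 0) by (unfold E; rewrite Ha, Hda; lra).
  assert (0 <= d * (B * B)) by (apply Rmult_le_pos; [lra | apply Rle_0_sqr]).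
  pose proof (gronwall E E' K (d * (B * B)) a b ltac:(unfold K; lra) ltac:(assumption) HE HEb HEa x Hx) as G.
  assert (exp (K * (x - a)) <= exp (K * (b - a))).
  { destruct (Req_dec x b) as [->|]; [lra|]. left. apply exp_increasing. unfold K. nra. }
  assert (d * (B * B) / K <= d * (B * B)).
  { unfold Rdiv. rewrite <- (Rmult_1_r (d * (B * B))) at 2. apply Rmult_le_compat_l; [lra|].
    rewrite <- Rinv_1. apply Rinv_le_contravar; unfold K; lra. }
  assert (0 <= d * (B * B) / K) by (apply Rle_mult_inv_pos; unfold K; lra).
  pose proof (exp_pos (K * (x - a))).
  fold E. fold K. apply (Rle_trans _ _ _ G). apply Rmult_le_compat; lra.
Qed.

(* Picone's identity: the Wronskian [du v - u dv] increases strictly, yet the sign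
   conditions at the zeros [a], [b] of [u] force [W a >= 0 >= W b]. *)
Lemma sturm_pos Q1 Q2 a b u du v dv : a < b -> ode_sol Q1 a b u du -> ode_sol Q2 a b v dv ->
  (forall x, a <= x <= b -> Q1 x < Q2 x) -> u a = 0 -> u b = 0 ->
  (forall x, a < x < b -> 0 < u x) -> (forall x, a < x < b -> 0 < v x) -> False.
Proof.
  intros Hab Hu Hv HQ Hua Hub Hup Hvp.
  set (W := fun y => du y * v y - u y * dv y).
  assert (HW : forall y, a <= y <= b -> derivable_pt_lim W y ((Q2 y - Q1 y) * u y * v y)).
  { intros y Hy. destruct (Hu y Hy), (Hv y Hy).
    eapply derivable_pt_lim_val; [apply dlim_minus; apply dlim_mult; eassumption | cbv beta; ring]. }
  destruct (MVT_cor2 W _ a b Hab HW) as [c [Hc1 Hc2]].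
  assert (0 < (Q2 c - Q1 c) * u c * v c).
  { specialize (HQ c ltac:(lra)). specialize (Hup c Hc2). specialize (Hvp c Hc2).
    apply Rmult_lt_0_compat; [apply Rmult_lt_0_compat|]; lra. }
  assert (Hv_end : forall e, a <= e <= b -> 0 <= v e).
  { intros e He. apply (cont_nonneg_closure v a b e Hab He).
    - exact (ode_sol_cont _ _ _ _ _ Hv e He).
    - intros x Hx. left. exact (Hvp x Hx). }
  assert (Hdua : 0 <= du a).
  { apply (deriv_nonneg_right u a _ (proj1 (Hu a ltac:(lra)))). exists (b - a). split; [lra|].
    intros h Hh. rewrite Hua. left. apply Hup. lra. }
  assert (Hdub : du b <= 0).
  { apply (deriv_nonpos_left u b _ (proj1 (Hu b ltac:(lra)))). exists (b - a). split; [lra|].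
    intros h Hh. rewrite Hub. left. apply Hup. lra. }
  assert (0 <= W a) by (unfold W; rewrite Hua; pose proof (Hv_end a ltac:(lra)); nra).
  assert (W b <= 0) by (unfold W; rewrite Hub; pose proof (Hv_end b ltac:(lra)); nra).
  assert (0 < (Q2 c - Q1 c) * u c * v c * (b - a)) by (apply Rmult_lt_0_compat; lra).
  lra.
Qed.

Lemma sturm_comparison Q1 Q2 a b u du v dv : a < b ->
  ode_sol Q1 a b u du -> ode_sol Q2 a b v dv ->
  (forall x, a <= x <= b -> Q1 x < Q2 x) -> u a = 0 -> u b = 0 ->
  (forall x, a < x < b -> u x <> 0) -> exists x, a < x < b /\ v x = 0.
Proof.
  intros Hab Hu Hv HQ Hua Hub Hnz.
  apply NNPP; intro Hno.
  assert (Hvnz : forall x, a < x < b -> v x <> 0) by (intros x Hx E; apply Hno; exists x; auto).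
  assert (Hu' := ode_sol_opp _ _ _ _ _ Hu). assert (Hv' := ode_sol_opp _ _ _ _ _ Hv).
  assert (Hua' : - u a = 0) by lra. assert (Hub' : - u b = 0) by lra.
  destruct (const_sign_of_nonzero u a b Hab (ode_sol_cont _ _ _ _ _ Hu) Hnz) as [Up|Un];
  destruct (const_sign_of_nonzero v a b Hab (ode_sol_cont _ _ _ _ _ Hv) Hvnz) as [Vp|Vn].
  - exact (sturm_pos Q1 Q2 a b u du v dv Hab Hu Hv HQ Hua Hub Up Vp).
  - apply (sturm_pos Q1 Q2 a b u du _ _ Hab Hu Hv' HQ Hua Hub Up).
    intros x Hx; specialize (Vn x Hx); lra.
  - apply (sturm_pos Q1 Q2 a b _ _ v dv Hab Hu' Hv HQ Hua' Hub'); [|exact Vp].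
    intros x Hx; specialize (Un x Hx); lra.
  - apply (sturm_pos Q1 Q2 a b _ _ _ _ Hab Hu' Hv' HQ Hua' Hub');
      intros x Hx; [specialize (Un x Hx) | specialize (Vn x Hx)]; lra.
Qed.

(** * Existence of solutions by Picard's series *)

Lemma abs_le_of_deriv_abs_le F F' G G' a b : a <= b ->
  (forall t, a <= t <= b -> derivable_pt_lim F t (F' t)) ->
  (forall t, a <= t <= b -> derivable_pt_lim G t (G' t)) ->
  (forall t, a <= t <= b -> Rabs (F' t) <= G' t) -> Rabs (F a) <= G a ->
  Rabs (F b) <= G b.
Proof.
  intros Hab HF HG Hb Ha. apply Rabs_le_between in Ha. apply Rabs_le_between.
  assert (G a - F a <= G b - F b).
  { apply (nondecreasing_of_deriv_nonneg (fun t => G t - F t) (fun t => G' t - F' t) a b); try lra.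
    - intros t Ht. apply dlim_minus; auto.
    - intros t Ht. specialize (Hb t Ht). apply Rabs_le_between in Hb. lra. }
  assert (G a + F a <= G b + F b).
  { apply (nondecreasing_of_deriv_nonneg (fun t => G t + F t) (fun t => G' t + F' t) a b); try lra.
    - intros t Ht. apply dlim_plus; auto.
    - intros t Ht. specialize (Hb t Ht). apply Rabs_le_between in Hb. lra. }
  lra.
Qed.

Lemma dlim_power_antideriv c a n t :
  derivable_pt_lim (fun t => c * (t - a) ^ S n / (INR n + 1)) t (c * (t - a) ^ n).
Proof.
  apply is_derive_Reals. auto_derive; [exact I|].
  assert (0 < INR n + 1) by (pose proof (pos_INR n); lra).
  replace (t + - a) with (t - a) by ring.
  destruct n; [simpl; field | rewrite <- S_INR in *; field; lra].
Qed.

Lemma power_integral_bound F F' a r n c : (forall t, derivable_pt_lim F t (F' t)) ->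
  F a = 0 -> 0 <= c -> (forall t, Rabs (t - a) <= r -> Rabs (F' t) <= c * Rabs (t - a) ^ n) ->
  forall x, Rabs (x - a) <= r -> Rabs (F x) <= c * Rabs (x - a) ^ S n / (INR n + 1).
Proof.
  intros HF Fa Hc Hb x Hx.
  assert (Hn : 0 < INR n + 1) by (pose proof (pos_INR n); lra).
  destruct (Rle_or_lt a x) as [Hax|Hax].
  - rewrite (Rabs_right (x - a)) by lra.
    apply (abs_le_of_deriv_abs_le F F' (fun t => c * (t - a) ^ S n / (INR n + 1))
             (fun t => c * (t - a) ^ n) a x Hax).
    + intros t _. apply HF.
    + intros t _. apply dlim_power_antideriv.
    + intros t Ht. rewrite <- (Rabs_right (t - a)) by lra. apply Hb.
      rewrite Rabs_right in Hx |- *; lra.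
    + rewrite Fa, Rminus_diag, pow_i, Rabs_R0 by lia. unfold Rdiv; lra.
  - rewrite (Rabs_left (x - a)) by lra.
    replace (- (x - a)) with (- x - - a) by ring. rewrite <- (Ropp_involutive x) at 1.
    apply (abs_le_of_deriv_abs_le (fun t => F (- t)) (fun t => - F' (- t))
             (fun t => c * (t - - a) ^ S n / (INR n + 1)) (fun t => c * (t - - a) ^ n)
             (- a) (- x) ltac:(lra)).
    + intros t _. apply derivable_pt_lim_reflect, HF.
    + intros t _. apply dlim_power_antideriv.
    + intros t Ht. rewrite Rabs_Ropp.
      replace (t - - a) with (Rabs (- t - a)) by (rewrite Rabs_left1; lra).
      apply Hb. rewrite Rabs_left in Hx by lra. rewrite Rabs_left1; lra.
    + rewrite Ropp_involutive, Fa, Rminus_diag, pow_i, Rabs_R0 by lia. unfold Rdiv; lra.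
Qed.

Lemma derivable_pt_lim_RInt g a : (forall x, continuity_pt g x) ->
  forall x, derivable_pt_lim (fun y => RInt g a y) x (g x).
Proof.
  intros Hg x. apply is_derive_Reals.
  apply (is_derive_RInt g (fun y => RInt g a y) a x).
  - apply filter_forall. intros y. apply (@RInt_correct R_CompleteNormedModule).
    apply (@ex_RInt_continuous R_CompleteNormedModule). intros z _.
    apply continuity_pt_filterlim, Hg.
  - apply continuity_pt_filterlim, Hg.
Qed.

Section Picard.
Variables (Q : R -> R) (a al be : R).
Hypothesis HQ : forall x, continuity_pt Q x.

(* The terms of Picard's series for [u'' = - Q u], [u a = al], [du a = be]. *)
Fixpoint picard (n : nat) : (R -> R) * (R -> R) :=
  match n with
  | O => (fun _ => al, fun _ => be)
  | S k => (fun x => RInt (snd (picard k)) a x,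
            fun x => RInt (fun t => - (Q t * fst (picard k) t)) a x)
  end.

Lemma picard_regular n :
  (forall x, continuity_pt (fst (picard n)) x) /\ (forall x, continuity_pt (snd (picard n)) x) /\
  (forall x, derivable_pt_lim (fst (picard (S n))) x (snd (picard n) x)) /\
  (forall x, derivable_pt_lim (snd (picard (S n))) x (- (Q x * fst (picard n) x))).
Proof.
  induction n as [|n [C1 [C2 [D1 D2]]]].
  - assert (C1 : forall x, continuity_pt (fst (picard 0)) x)
      by (intros; apply continuity_pt_const; intros ? ?; reflexivity).
    assert (C2 : forall x, continuity_pt (snd (picard 0)) x)
      by (intros; apply continuity_pt_const; intros ? ?; reflexivity).
    repeat split; [exact C1 | exact C2 | |].
    + apply derivable_pt_lim_RInt, C2.
    + apply (derivable_pt_lim_RInt (fun t => - (Q t * fst (picard 0) t))).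
      intros x. apply continuity_pt_opp, continuity_pt_mult; auto.
  - assert (C1' : forall x, continuity_pt (fst (picard (S n))) x)
      by (intros x; exact (derivable_pt_lim_cont _ _ _ (D1 x))).
    assert (C2' : forall x, continuity_pt (snd (picard (S n))) x)
      by (intros x; exact (derivable_pt_lim_cont _ _ _ (D2 x))).
    repeat split; [exact C1' | exact C2' | |].
    + apply derivable_pt_lim_RInt, C2'.
    + apply (derivable_pt_lim_RInt (fun t => - (Q t * fst (picard (S n)) t))).
      intros x. apply continuity_pt_opp, continuity_pt_mult; auto.
Qed.

Lemma picard_deriv n x :
  derivable_pt_lim (fst (picard (S n))) x (snd (picard n) x) /\
  derivable_pt_lim (snd (picard (S n))) x (- (Q x * fst (picard n) x)).
Proof. destruct (picard_regular n) as [_ [_ [D1 D2]]]. split; [apply D1 | apply D2]. Qed.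

Lemma picard_base n : fst (picard (S n)) a = 0 /\ snd (picard (S n)) a = 0.
Proof. simpl. rewrite !RInt_point. split; reflexivity. Qed.

Lemma picard_bound r M : 0 <= M -> (forall t, Rabs (t - a) <= r -> Rabs (Q t) <= M) ->
  forall n x, Rabs (x - a) <= r ->
    Rabs (fst (picard n) x) <= (Rabs al + Rabs be) * ((M + 1) * Rabs (x - a)) ^ n / INR (Factorial.fact n) /\
    Rabs (snd (picard n) x) <= (Rabs al + Rabs be) * ((M + 1) * Rabs (x - a)) ^ n / INR (Factorial.fact n).
Proof.
  intros HM HQb n. set (B := Rabs al + Rabs be). set (K := M + 1).
  assert (HB : 0 <= B) by (unfold B; pose proof (Rabs_pos al); pose proof (Rabs_pos be); lra).
  induction n as [|n IH]; intros x Hx.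
  - simpl. unfold B, Rdiv. rewrite Rinv_1, !Rmult_1_r.
    pose proof (Rabs_pos al); pose proof (Rabs_pos be). split; lra.
  - assert (D1 := fun x => proj1 (picard_deriv n x)).
    assert (D2 := fun x => proj2 (picard_deriv n x)).
    destruct (picard_base n) as [Z1 Z2].
    set (c := B * K ^ S n / INR (Factorial.fact n)).
    assert (Hf : 0 < INR (Factorial.fact n)) by (apply lt_0_INR, Factorial.lt_O_fact).
    assert (HK : 1 <= K) by (unfold K; lra).
    assert (HKn : 0 <= K ^ n) by (apply pow_le; lra).
    assert (Hc : 0 <= c).
    { unfold c. apply Rle_mult_inv_pos; [apply Rmult_le_pos; [lra | apply pow_le; lra] | lra]. }
    assert (Hfin : c * Rabs (x - a) ^ S n / (INR n + 1)
                   = B * (K * Rabs (x - a)) ^ S n / INR (Factorial.fact (S n))).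
    { rewrite fact_simpl, mult_INR, S_INR, Rpow_mult_distr. unfold c. field.
      pose proof (pos_INR n). lra. }
    assert (Hstep : forall t,
      B * (K * Rabs (t - a)) ^ n / INR (Factorial.fact n) * K <= c * Rabs (t - a) ^ n).
    { intros t. unfold c. rewrite Rpow_mult_distr. simpl (K ^ S n). unfold Rdiv. nra. }
    split; rewrite <- Hfin.
    + apply (power_integral_bound _ (snd (picard n)) a r n c D1 Z1 Hc); [|exact Hx].
      intros t Ht. destruct (IH t Ht) as [_ H2]. specialize (Hstep t).
      assert (0 <= B * (K * Rabs (t - a)) ^ n / INR (Factorial.fact n)).
      { apply Rle_mult_inv_pos; [|lra]. apply Rmult_le_pos; [lra|].
        apply pow_le, Rmult_le_pos; [lra | apply Rabs_pos]. }
      fold B K in H2. nra.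
    + apply (power_integral_bound _ (fun t => - (Q t * fst (picard n) t)) a r n c D2 Z2 Hc);
        [|exact Hx].
      intros t Ht. destruct (IH t Ht) as [H1 _]. specialize (Hstep t).
      rewrite Rabs_Ropp, Rabs_mult. fold B K in H1.
      assert (Rabs (Q t) <= K) by (specialize (HQb t Ht); unfold K; lra).
      apply Rle_trans with (K * (B * (K * Rabs (t - a)) ^ n / INR (Factorial.fact n))); [|lra].
      apply Rmult_le_compat; auto; apply Rabs_pos.
Qed.

Lemma picard_bound_radius r M : 0 <= M -> (forall t, Rabs (t - a) <= r -> Rabs (Q t) <= M) ->
  forall n x, Rabs (x - a) <= r ->
    Rabs (fst (picard n) x) <= (Rabs al + Rabs be) * ((M + 1) * r) ^ n / INR (Factorial.fact n) /\
    Rabs (snd (picard n) x) <= (Rabs al + Rabs be) * ((M + 1) * r) ^ n / INR (Factorial.fact n).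
Proof.
  intros HM HQb n x Hx. destruct (picard_bound r M HM HQb n x Hx) as [H1 H2].
  assert ((Rabs al + Rabs be) * ((M + 1) * Rabs (x - a)) ^ n / INR (Factorial.fact n)
          <= (Rabs al + Rabs be) * ((M + 1) * r) ^ n / INR (Factorial.fact n)).
  { unfold Rdiv. apply Rmult_le_compat_r; [left; apply Rinv_0_lt_compat, lt_0_INR, Factorial.lt_O_fact|].
    apply Rmult_le_compat_l; [pose proof (Rabs_pos al); pose proof (Rabs_pos be); lra|].
    apply pow_incr. split; [apply Rmult_le_pos; [lra | apply Rabs_pos] | apply Rmult_le_compat_l; lra]. }
  split; lra.
Qed.

End Picard.

Definition series_sum (fn : nat -> R -> R) (y : R) : R :=
  real (Lim_seq (fun N => sum_f_R0 (fun n => fn n y) N)).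

Lemma series_sum_val fn y l :
  Un_cv (fun N => sum_f_R0 (fun n => fn n y) N) l -> series_sum fn y = l.
Proof.
  intro H. unfold series_sum. rewrite (is_lim_seq_unique _ l); [reflexivity|].
  apply is_lim_seq_Reals, H.
Qed.

Lemma series_cv_of_abs_le (s A : nat -> R) lA : (forall n, Rabs (s n) <= A n) ->
  Un_cv (sum_f_R0 A) lA -> exists l, Un_cv (sum_f_R0 s) l.
Proof.
  intros Hb HA.
  assert (Hpm : forall n, 0 <= (Rabs (s n) + s n) / 2 <= A n /\ 0 <= (Rabs (s n) - s n) / 2 <= A n).
  { intro n. specialize (Hb n). pose proof (Rabs_le_between (s n) (Rabs (s n))) as [H _].
    specialize (H (Rle_refl _)). split; split; lra. }
  destruct (Rseries_CV_comp (fun n => (Rabs (s n) + s n) / 2) A) as [l1 H1];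
    [intro n; apply Hpm | exists lA; exact HA |].
  destruct (Rseries_CV_comp (fun n => (Rabs (s n) - s n) / 2) A) as [l2 H2];
    [intro n; apply Hpm | exists lA; exact HA |].
  exists (l1 - l2). intros eps Heps.
  destruct (CV_minus _ _ _ _ H1 H2 eps Heps) as [N HN]. exists N. intros n Hn.
  specialize (HN n Hn). cbv beta in HN. rewrite <- minus_sum in HN.
  erewrite sum_eq; [exact HN|]. intros i _. cbv beta. field.
Qed.

Lemma weierstrass_M_test (fn : nat -> R -> R) (A : nat -> R) lA c (r : posreal) :
  (forall n y, Boule c r y -> Rabs (fn n y) <= A n) -> Un_cv (sum_f_R0 A) lA ->
  (forall y, Boule c r y -> Un_cv (fun N => sum_f_R0 (fun n => fn n y) N) (series_sum fn y)) /\
  CVU (fun N y => sum_f_R0 (fun n => fn n y) N) (series_sum fn) c r.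
Proof.
  intros Hb HA.
  assert (Hp : forall y, Boule c r y ->
    Un_cv (fun N => sum_f_R0 (fun n => fn n y) N) (series_sum fn y)).
  { intros y Hy. destruct (series_cv_of_abs_le (fun n => fn n y) A lA) as [l Hl];
      [intro n; apply Hb, Hy | exact HA |].
    rewrite (series_sum_val fn y l Hl). exact Hl. }
  split; [exact Hp|].
  intros eps Heps. destruct (HA eps Heps) as [N HN]. exists N. intros n y Hn Hy.
  pose proof (sum_maj1 fn A y (series_sum fn y) lA n (Hp y Hy) HA (fun k => Hb k y Hy)) as H.
  specialize (HN n Hn). unfold R_dist in HN. unfold SP in H.
  apply Rabs_lt_between in HN. eapply Rle_lt_trans; [exact H | lra].
Qed.

Lemma dlim_sum_f_R0 (fn fn' : nat -> R -> R) y :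
  (forall n, derivable_pt_lim (fn n) y (fn' n y)) ->
  forall N, derivable_pt_lim (fun z => sum_f_R0 (fun n => fn n z) N) y (sum_f_R0 (fun n => fn' n y) N).
Proof.
  intros H N. induction N as [|N IH]; simpl; [apply H | apply dlim_plus; auto].
Qed.

Lemma dlim_series_sum (fn fn' : nat -> R -> R) A A' lA lA' c (r : posreal) :
  (forall n y, Boule c r y -> derivable_pt_lim (fn n) y (fn' n y)) ->
  (forall n y, Boule c r y -> Rabs (fn n y) <= A n) -> Un_cv (sum_f_R0 A) lA ->
  (forall n y, Boule c r y -> Rabs (fn' n y) <= A' n) -> Un_cv (sum_f_R0 A') lA' ->
  forall x, Boule c r x -> derivable_pt_lim (series_sum fn) x (series_sum fn' x).
Proof.
  intros Hd Hb HA Hb' HA' x Hx.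
  destruct (weierstrass_M_test fn A lA c r Hb HA) as [P1 _].
  destruct (weierstrass_M_test fn' A' lA' c r Hb' HA') as [_ C2].
  apply (CVU_derivable (fun N y => sum_f_R0 (fun n => fn n y) N)
           (fun N y => sum_f_R0 (fun n => fn' n y) N) (series_sum fn) (series_sum fn') c r C2 P1);
    [|exact Hx].
  intros n y Hy. apply dlim_sum_f_R0. intros k. apply Hd, Hy.
Qed.

Lemma Un_cv_sum_shift (w : nat -> R) l : Un_cv (sum_f_R0 w) l ->
  Un_cv (sum_f_R0 (fun n => match n with O => 0 | S k => w k end)) l.
Proof.
  intros H.
  assert (E : forall N, sum_f_R0 (fun n => match n with O => 0 | S k => w k end) (S N)
                        = sum_f_R0 w N).
  { induction N as [|N IH]; simpl in *; [ring | rewrite IH; reflexivity]. }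
  intros eps Heps. destruct (H eps Heps) as [N HN]. exists (S N). intros n Hn.
  destruct n as [|n]; [lia|]. rewrite E. apply HN. lia.
Qed.

Lemma Un_cv_sum_scal K (A : nat -> R) l : Un_cv (sum_f_R0 A) l ->
  Un_cv (sum_f_R0 (fun n => K * A n)) (K * l).
Proof.
  intros H eps He.
  assert (Hc : Un_cv (fun _ => K) K).
  { intros e He'; exists 0%nat; intros; unfold R_dist; rewrite Rminus_diag, Rabs_R0; lra. }
  destruct (CV_mult _ _ _ _ Hc H eps He) as [N HN]. exists N. intros n Hn.
  specialize (HN n Hn). rewrite scal_sum in HN.
  erewrite sum_eq; [exact HN|]. intros i _. cbv beta. ring.
Qed.

Lemma exp_series_scal B x :
  Un_cv (sum_f_R0 (fun n => B * x ^ n / INR (Factorial.fact n))) (B * exp x).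
Proof.
  pose proof (proj2_sig (exist_exp x)) as H. fold (exp x) in H. unfold exp_in, infinite_sum in H.
  assert (H' : Un_cv (sum_f_R0 (fun i => / INR (Factorial.fact i) * x ^ i)) (exp x)).
  { intros eps He. destruct (H eps He) as [N HN]. exists N. intros n Hn. apply HN. lia. }
  intros eps He. destruct (Un_cv_sum_scal B _ _ H' eps He) as [N HN]. exists N. intros n Hn.
  erewrite sum_eq; [exact (HN n Hn)|]. intros i _. cbv beta. unfold Rdiv. ring.
Qed.

Lemma dlim_series_sum_shift (fn gn : nat -> R -> R) A lA K c (r : posreal) :
  (forall y, derivable_pt_lim (fn O) y 0) ->
  (forall k y, Boule c r y -> derivable_pt_lim (fn (S k)) y (gn k y)) ->
  (forall n y, Boule c r y -> Rabs (fn n y) <= A n) ->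
  (forall k y, Boule c r y -> Rabs (gn k y) <= K * A k) -> Un_cv (sum_f_R0 A) lA ->
  forall x, Boule c r x -> derivable_pt_lim (series_sum fn) x (series_sum gn x).
Proof.
  intros H0 Hd Hb Hg HA x Hx.
  set (hn := fun n y => match n with O => 0 | S k => gn k y end).
  replace (series_sum gn x) with (series_sum hn x).
  - apply (dlim_series_sum fn hn A (fun n => match n with O => 0 | S k => K * A k end)
             lA (K * lA) c r); [| exact Hb | exact HA | | | exact Hx].
    + intros [|k] y Hy; [apply H0 | apply Hd, Hy].
    + intros [|k] y Hy; simpl; [rewrite Rabs_R0; lra | apply Hg, Hy].
    + apply Un_cv_sum_shift, Un_cv_sum_scal, HA.
  - destruct (weierstrass_M_test gn (fun k => K * A k) (K * lA) c r Hg (Un_cv_sum_scal K A lA HA))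
      as [Pg _].
    apply series_sum_val, (Un_cv_sum_shift (fun k => gn k x)), Pg, Hx.
Qed.

Lemma sum_f_R0_tail_zero (v : nat -> R) : (forall k, v (S k) = 0) ->
  forall N, sum_f_R0 v N = v O.
Proof. intros H N. induction N as [|N IH]; simpl; [reflexivity | rewrite IH, H; ring]. Qed.

(* The Picard series converges on a ball around [a], dominated by [B (K r)^n / n!]. *)
Lemma ode_exists Q a b al be : (forall x, continuity_pt Q x) -> a <= b ->
  exists u du, u a = al /\ du a = be /\ ode_sol Q a b u du.
Proof.
  intros HQ Hab. set (r := b - a + 1).
  assert (Hr : 0 < r) by (unfold r; lra). set (rp := mkposreal r Hr).
  destruct (bounded_on_segment Q (a - r) (a + r) ltac:(lra) (fun x _ => HQ x)) as [M [HM HMb]].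
  assert (HQb : forall t, Rabs (t - a) <= r -> Rabs (Q t) <= M).
  { intros t Ht. apply HMb. apply Rabs_le_between in Ht. lra. }
  assert (Hball : forall y, Boule a rp y -> Rabs (y - a) <= r).
  { intros y Hy. unfold Boule in Hy. simpl in Hy. lra. }
  set (U := fun n => fst (picard Q a al be n)). set (D := fun n => snd (picard Q a al be n)).
  set (A := fun n => (Rabs al + Rabs be) * ((M + 1) * r) ^ n / INR (Factorial.fact n)).
  assert (HA : Un_cv (sum_f_R0 A) ((Rabs al + Rabs be) * exp ((M + 1) * r)))
    by apply exp_series_scal.
  assert (Hbnd : forall n y, Boule a rp y -> Rabs (U n y) <= A n /\ Rabs (D n y) <= A n)
    by (intros n y Hy; exact (picard_bound_radius Q a al be HQ r M HM HQb n y (Hball y Hy))).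
  destruct (weierstrass_M_test U A _ a rp (fun n y Hy => proj1 (Hbnd n y Hy)) HA) as [PU _].
  assert (HQU : forall x, Boule a rp x ->
    series_sum (fun k x => - (Q x * U k x)) x = - (Q x * series_sum U x)).
  { intros x Hx. apply series_sum_val. intros eps He.
    destruct (Un_cv_sum_scal (- Q x) _ _ (PU x Hx) eps He) as [N HN]. exists N. intros n Hn.
    replace (- (Q x * series_sum U x)) with (- Q x * series_sum U x) by ring.
    erewrite sum_eq; [exact (HN n Hn)|]. intros i _. cbv beta. ring. }
  exists (series_sum U), (series_sum D). split; [|split].
  - apply series_sum_val. intros eps He. exists 0%nat. intros n _.
    rewrite (sum_f_R0_tail_zero (fun k => U k a)) by (intro k; exact (proj1 (picard_base Q a al be k))).
    unfold R_dist. simpl. rewrite Rminus_diag, Rabs_R0. lra.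
  - apply series_sum_val. intros eps He. exists 0%nat. intros n _.
    rewrite (sum_f_R0_tail_zero (fun k => D k a)) by (intro k; exact (proj2 (picard_base Q a al be k))).
    unfold R_dist. simpl. rewrite Rminus_diag, Rabs_R0. lra.
  - intros x Hx. assert (Hb : Boule a rp x).
    { unfold Boule; simpl. apply Rabs_def1; unfold r; lra. }
    split; [|rewrite <- HQU by exact Hb].
    + apply (dlim_series_sum_shift U D A ((Rabs al + Rabs be) * exp ((M + 1) * r)) 1 a rp); [intro y; apply derivable_pt_lim_const
        | intros k y _; exact (proj1 (picard_deriv Q a al be HQ k y)) | intros n y Hy; apply Hbnd, Hy
        | intros k y Hy; rewrite Rmult_1_l; apply Hbnd, Hy | exact HA | exact Hb].
    + apply (dlim_series_sum_shift D _ A ((Rabs al + Rabs be) * exp ((M + 1) * r)) (M + 1) a rp); [intro y; apply derivable_pt_lim_const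
        | intros k y _; exact (proj2 (picard_deriv Q a al be HQ k y)) | intros n y Hy; apply Hbnd, Hy
        | | exact HA | exact Hb].
      intros k y Hy. rewrite Rabs_Ropp, Rabs_mult.
      assert (Rabs (Q y) <= M + 1) by (specialize (HQb y (Hball y Hy)); lra).
      apply Rmult_le_compat; [apply Rabs_pos | apply Rabs_pos | assumption | apply Hbnd, Hy].
Qed.

(** * Integrals over the velocity variable *)

Lemma Rdiv_le_cross a b c d : 0 < b -> 0 < d -> a * d <= c * b -> a / b <= c / d.
Proof.
  intros Hb Hd H.
  assert (E : c / d - a / b = (c * b - a * d) / (b * d)) by (field; lra).
  assert (0 <= (c * b - a * d) / (b * d)) by (apply Rle_mult_inv_pos; nra).
  lra.
Qed.

Lemma improper_integral_unique f l1 l2 :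
  improper_integral f l1 -> improper_integral f l2 -> l1 = l2.
Proof.
  intros H1 H2. apply Rminus_diag_uniq, Rabs_eq_0, Rle_antisym; [|apply Rabs_pos].
  apply Rle_plus_epsilon. intros e He. rewrite Rplus_0_l.
  destruct (H1 (e / 2) ltac:(lra)) as [M1 HM1]. destruct (H2 (e / 2) ltac:(lra)) as [M2 HM2].
  set (b := Rabs M1 + Rabs M2).
  pose proof (Rabs_le_between M1 (Rabs M1)) as [HB1 _]. specialize (HB1 (Rle_refl _)).
  pose proof (Rabs_le_between M2 (Rabs M2)) as [HB2 _]. specialize (HB2 (Rle_refl _)).
  pose proof (Rabs_pos M1). pose proof (Rabs_pos M2).
  destruct (HM1 (- b) b ltac:(unfold b; lra) ltac:(unfold b; lra)) as [p1 Hp1].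
  destruct (HM2 (- b) b ltac:(unfold b; lra) ltac:(unfold b; lra)) as [p2 Hp2].
  rewrite (RiemannInt_P5 p1 p2) in Hp1.
  replace (l1 - l2) with ((RiemannInt p2 - l2) - (RiemannInt p2 - l1)) by ring.
  eapply Rle_trans; [apply Rabs_triang|]. rewrite Rabs_Ropp. lra.
Qed.

Lemma improper_integral_RInt f l : improper_integral f l -> forall eps, 0 < eps ->
  exists M, 0 < M /\ forall b, M <= b -> ex_RInt f (- b) b /\ Rabs (RInt f (- b) b - l) < eps.
Proof.
  intros H eps He. destruct (H eps He) as [M HM]. exists (Rabs M + 1).
  pose proof (Rabs_le_between M (Rabs M)) as [HB _]. specialize (HB (Rle_refl _)).
  split; [pose proof (Rabs_pos M); lra|].
  intros b Hb. destruct (HM (- b) b ltac:(lra) ltac:(lra)) as [pr Hpr].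
  split; [apply ex_RInt_Reals_1, pr | rewrite (RInt_Reals f (- b) b pr); exact Hpr].
Qed.

Lemma RInt_Rminus f g a b : ex_RInt f a b -> ex_RInt g a b ->
  RInt (fun v => f v - g v) a b = RInt f a b - RInt g a b.
Proof. exact (RInt_minus f g a b). Qed.

Lemma ex_RInt_Rminus f g a b : ex_RInt f a b -> ex_RInt g a b -> ex_RInt (fun v => f v - g v) a b.
Proof. exact (ex_RInt_minus f g a b). Qed.

Lemma RInt_Rscal k f a b : ex_RInt f a b -> RInt (fun v => k * f v) a b = k * RInt f a b.
Proof. exact (RInt_scal f a b k). Qed.

Lemma ex_RInt_Rscal k f a b : ex_RInt f a b -> ex_RInt (fun v => k * f v) a b.
Proof. exact (ex_RInt_scal f a b k). Qed.

(* The majorant [k / (V^2 + v^2)] has primitive [k / V atan (v / V)]. *)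
Lemma RInt_le_lorentzian g V k a b : 0 < V -> 0 <= k -> a <= b ->
  (forall v, continuity_pt g v) ->
  (forall v, a <= v <= b -> Rabs (g v) <= k / (V * V + v * v)) ->
  Rabs (RInt g a b) <= k * PI / V.
Proof.
  intros HV Hk Hab Hg Hb.
  set (h := fun v => k / (V * V + v * v)).
  assert (Hpos : forall t, 0 < V * V + t * t) by (intros; nra).
  assert (Hcont : forall f, (forall v, continuity_pt f v) -> ex_RInt f a b).
  { intros f Hf. apply (@ex_RInt_continuous R_CompleteNormedModule).
    intros z _. apply continuity_pt_filterlim, Hf. }
  assert (Hhc : forall t, continuity_pt h t).
  { intros t. apply continuity_pt_div; [apply continuity_pt_const; intros ? ?; reflexivity| |].
    - apply continuity_pt_plus; [apply continuity_pt_const; intros ? ?; reflexivity|].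
      apply continuity_pt_mult; apply continuity_pt_id.
    - specialize (Hpos t). lra. }
  set (F := fun t => k / V * atan (t / V)).
  assert (HF : forall t, derivable_pt_lim F t (h t)).
  { intros t. apply is_derive_Reals. unfold F, h. auto_derive; [exact I|].
    specialize (Hpos t). field. split; lra. }
  assert (HRh : RInt h a b = F b - F a).
  { apply is_RInt_unique, (is_RInt_derive F h).
    - intros t _. apply is_derive_Reals, HF.
    - intros t _. apply continuity_pt_filterlim, Hhc. }
  assert (H1 := abs_RInt_le g a b Hab (Hcont g Hg)).
  assert (H2 : RInt (fun t => Rabs (g t)) a b <= RInt h a b).
  { apply RInt_le; [exact Hab | | apply Hcont, Hhc | intros t Ht; apply Hb; lra].
    apply Hcont. intros v. apply (continuity_pt_comp g Rabs); [apply Hg | apply Rcontinuity_abs]. }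
  assert (H3 : F b - F a <= k * PI / V).
  { unfold F. pose proof (atan_bound (b / V)). pose proof (atan_bound (a / V)).
    assert (0 <= k / V) by (apply Rle_mult_inv_pos; lra).
    replace (k * PI / V) with (k / V * PI) by (field; lra).
    rewrite <- Rmult_minus_distr_l. apply Rmult_le_compat_l; lra. }
  lra.
Qed.

Lemma abs_le_inv_of_decay mu' C gamma : gamma > 1 -> C > 0 ->
  (forall y, Rabs (mu' y) <= C / (1 + abs_rpow y gamma)) ->
  forall y, 1 <= y -> Rabs (mu' y) <= C / y.
Proof.
  intros Hg HC H y Hy. eapply Rle_trans; [apply H|].
  unfold abs_rpow. destruct (Req_EM_T y 0) as [E|E]; [lra|].
  rewrite Rabs_right by lra.
  assert (Hp : Rpower y 1 <= Rpower y gamma) by (apply Rle_Rpower; lra).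
  rewrite Rpower_1 in Hp by lra.
  apply Rdiv_le_cross; nra.
Qed.

Lemma MVT_between f f' : (forall y, derivable_pt_lim f y (f' y)) -> forall y1 y2,
  exists xi, Rmin y1 y2 <= xi <= Rmax y1 y2 /\ f y2 - f y1 = f' xi * (y2 - y1).
Proof.
  intros H y1 y2. destruct (Rtotal_order y1 y2) as [Hl|[<-|Hg]].
  - destruct (MVT_cor2 f f' y1 y2 Hl (fun c _ => H c)) as [xi [E Hx]].
    exists xi. rewrite Rmin_left, Rmax_right by lra. split; [lra | exact E].
  - exists y1. rewrite Rmin_left, Rmax_left by lra. split; [lra | ring].
  - destruct (MVT_cor2 f f' y2 y1 Hg (fun c _ => H c)) as [xi [E Hx]].
    exists xi. rewrite Rmin_right, Rmax_left by lra. split; [lra|].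
    replace (f y2 - f y1) with (- (f y1 - f y2)) by ring. rewrite E. ring.
Qed.

Lemma derivable_pt_lim_of_increment g phi x l k : derivable_pt_lim phi x l ->
  (forall eps, 0 < eps -> exists d, 0 < d /\ forall y, Rabs (phi y - phi x) < d ->
     Rabs (g y - g x - k * (phi y - phi x)) <= eps * Rabs (phi y - phi x)) ->
  derivable_pt_lim g x (k * l).
Proof.
  intros Hphi Hinc eps Heps.
  set (A := Rabs k + 1). set (B := Rabs l + 1).
  assert (HA : 0 < A) by (unfold A; pose proof (Rabs_pos k); lra).
  assert (HB : 0 < B) by (unfold B; pose proof (Rabs_pos l); lra).
  set (e := Rmin 1 (eps / (2 * A))).
  assert (He : 0 < e /\ e <= 1 /\ e <= eps / (2 * A)).
  { unfold e. repeat split; [apply Rmin_pos; [lra | apply Rdiv_lt_0_compat; lra] | apply Rmin_l | apply Rmin_r]. }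
  destruct (Hinc (eps / (2 * B)) ltac:(apply Rdiv_lt_0_compat; lra)) as [d [Hd Hd2]].
  destruct (Hphi e (proj1 He)) as [[al Hal] Hc]. simpl in Hc.
  assert (Hdel : 0 < Rmin al (d / B)) by (apply Rmin_pos; [exact Hal | apply Rdiv_lt_0_compat; lra]).
  exists (mkposreal _ Hdel). simpl. intros h Hh0 Hh.
  assert (Hh1 : Rabs h < al) by (eapply Rlt_le_trans; [exact Hh | apply Rmin_l]).
  assert (Hh2 : Rabs h < d / B) by (eapply Rlt_le_trans; [exact Hh | apply Rmin_r]).
  assert (Hhpos : 0 < Rabs h) by (apply Rabs_pos_lt, Hh0).
  set (D := phi (x + h) - phi x). specialize (Hc h Hh0 Hh1). fold D in Hc.
  assert (HDh : Rabs (D / h) <= B).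
  { apply Rabs_lt_between in Hc. pose proof (Rabs_le_between l (Rabs l)) as [HL _].
    specialize (HL (Rle_refl _)). apply Rabs_le. unfold B. lra. }
  assert (HDabs : Rabs D = Rabs (D / h) * Rabs h).
  { rewrite <- Rabs_mult. f_equal. field. exact Hh0. }
  assert (HD : Rabs D < d).
  { rewrite HDabs. apply Rle_lt_trans with (B * Rabs h); [apply Rmult_le_compat_r; lra|].
    replace d with (B * (d / B)) by (field; lra). apply Rmult_lt_compat_l; lra. }
  specialize (Hd2 (x + h) HD). fold D in Hd2.
  replace ((g (x + h) - g x) / h - k * l)
    with ((g (x + h) - g x - k * D) / h + k * (D / h - l)) by (unfold D; field; exact Hh0).
  eapply Rle_lt_trans; [apply Rabs_triang|].
  assert (T1 : Rabs ((g (x + h) - g x - k * D) / h) <= eps / 2).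
  { unfold Rdiv at 1. rewrite Rabs_mult, Rabs_inv.
    apply Rle_trans with (eps / (2 * B) * Rabs (D / h)).
    - rewrite HDabs in Hd2. apply (Rmult_le_reg_r (Rabs h)); [exact Hhpos|].
      rewrite Rmult_assoc, Rinv_l, Rmult_1_r by lra. lra.
    - replace (eps / 2) with (eps / (2 * B) * B) by (field; lra).
      apply Rmult_le_compat_l; [left; apply Rdiv_lt_0_compat; lra | exact HDh]. }
  assert (T2 : Rabs (k * (D / h - l)) < eps / 2).
  { rewrite Rabs_mult. apply Rle_lt_trans with (A * Rabs (D / h - l)).
    - apply Rmult_le_compat_r; [apply Rabs_pos | unfold A; lra].
    - replace (eps / 2) with (A * (eps / (2 * A))) by (field; lra).
      apply Rmult_lt_compat_l; lra. }
  lra.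
Qed.

Lemma continuity_pt_v2_shift f c : (forall y, continuity_pt f y) ->
  forall v, continuity_pt (fun v => f (v ^ 2 / 2 + c)) v.
Proof.
  intros Hf v. apply (continuity_pt_comp (fun v => v ^ 2 / 2 + c) f); [|apply Hf].
  apply (derivable_pt_lim_cont _ v v). apply is_derive_Reals. auto_derive; [exact I | field].
Qed.

Section VelocityIntegrals.
Variables (mu mu' phi q ddphi : R -> R) (C m M : R).
Hypotheses (HC : 0 < C) (Hmu'c : forall y, continuity_pt mu' y)
  (Hdec : forall y, 1 <= y -> Rabs (mu' y) <= C / y)
  (Hrange : forall x, m <= phi x <= M)
  (Hq : forall x, improper_integral (fun v => mu' (v ^ 2 / 2 + phi x)) (q x)).

(* Near [v = 0] the bound comes from uniform continuity of [mu'] on a compact set,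
   for [v^2 >= V^2] from the decay [|mu' y| <= C / y]. *)
Lemma mu'_shift_modulus eps : 0 < eps -> exists V d, 0 < V /\ 0 < d /\ 32 * C * PI / V <= eps /\
  forall c s v, m <= c <= M -> m <= s <= M -> Rabs (s - c) < d ->
    Rabs (mu' (v ^ 2 / 2 + s) - mu' (v ^ 2 / 2 + c)) <= 32 * C / (V * V + v * v).
Proof.
  intros He. pose proof PI_RGT_0 as Hpi.
  set (V := 2 + 2 * Rabs m + 32 * C * PI / eps).
  assert (H0 : 0 <= 32 * C * PI / eps) by (apply Rle_mult_inv_pos; [|lra]; nra).
  pose proof (Rabs_pos m) as Hm0.
  pose proof (Rabs_le_between m (Rabs m)) as [Hmm _]. specialize (Hmm (Rle_refl _)).
  assert (HV : 2 + 2 * Rabs m <= V) by (unfold V; lra).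
  set (e0 := 16 * C / (V * V)).
  assert (He0 : 0 < e0) by (unfold e0; apply Rdiv_lt_0_compat; nra).
  destruct (@Heine_cor2 mu' m (V * V / 2 + M) (fun x _ => Hmu'c x) (mkposreal e0 He0))
    as [[d Hd] Hu].
  exists V, d. split; [lra|]. split; [exact Hd|]. split.
  { apply (Rmult_le_reg_r V); [lra|]. unfold Rdiv at 1.
    rewrite Rmult_assoc, Rinv_l, Rmult_1_r by lra. unfold V.
    replace (eps * (2 + 2 * Rabs m + 32 * C * PI / eps))
      with (eps * (2 + 2 * Rabs m) + 32 * C * PI) by (field; lra).
    assert (0 <= eps * (2 + 2 * Rabs m)) by (apply Rmult_le_pos; lra). lra. }
  intros c s v Hc1 Hs1 Hsc.
  assert (Hvv : 0 <= v * v) by nra.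
  replace (v ^ 2) with (v * v) by ring.
  destruct (Rlt_or_le (v * v) (V * V)) as [Hsm|Hbg].
  - simpl in Hu. left. apply Rlt_le_trans with e0.
    + apply Hu; try lra. replace (v * v / 2 + s - (v * v / 2 + c)) with (s - c) by ring. exact Hsc.
    + unfold e0. apply Rdiv_le_cross; nra.
  - assert (Hb : forall t, m <= t -> Rabs (mu' (v * v / 2 + t)) <= 4 * C / (v * v)).
    { intros t Ht. assert (V * V >= 4 + 8 * Rabs m) by nra.
      eapply Rle_trans; [apply Hdec; lra | apply Rdiv_le_cross; nra]. }
    eapply Rle_trans; [unfold Rminus; apply Rabs_triang|]. rewrite Rabs_Ropp.
    pose proof (Hb s (proj1 Hs1)). pose proof (Hb c (proj1 Hc1)).
    assert (8 * C / (v * v) <= 32 * C / (V * V + v * v)) by (apply Rdiv_le_cross; nra).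
    assert (4 * C / (v * v) + 4 * C / (v * v) = 8 * C / (v * v)) by (field; nra).
    lra.
Qed.

Lemma q_continuous : (forall x, continuity_pt phi x) -> forall x, continuity_pt q x.
Proof.
  intros Hphic x eps Heps.
  destruct (mu'_shift_modulus (eps / 2) ltac:(lra)) as [V [d [HV [Hd [Hle Hpt]]]]].
  destruct (Hphic x d Hd) as [alp [Halp Hphix]].
  exists alp. split; [exact Halp|]. intros y Hy. simpl in Hphix |- *. unfold R_dist in *.
  assert (Hpd : Rabs (phi y - phi x) < d) by (apply Hphix, Hy).
  apply Rle_lt_trans with (eps / 2); [|lra].
  apply Rle_plus_epsilon. intros eta Heta.
  destruct (improper_integral_RInt _ _ (Hq y) (eta / 2) ltac:(lra)) as [My [HMy Ay]].
  destruct (improper_integral_RInt _ _ (Hq x) (eta / 2) ltac:(lra)) as [Mx [HMx Ax]].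
  destruct (Ay (My + Mx) ltac:(lra)) as [Ey Ay']. destruct (Ax (My + Mx) ltac:(lra)) as [Ex Ax'].
  assert (HI : Rabs (RInt (fun v => mu' (v ^ 2 / 2 + phi y) - mu' (v ^ 2 / 2 + phi x))
                  (- (My + Mx)) (My + Mx)) <= 32 * C * PI / V).
  { apply RInt_le_lorentzian; try lra.
    - intros v. apply continuity_pt_minus; apply continuity_pt_v2_shift, Hmu'c.
    - intros v _. apply Hpt; auto. }
  rewrite RInt_Rminus in HI by assumption.
  apply Rabs_lt_between in Ay'. apply Rabs_lt_between in Ax'. apply Rabs_le_between in HI.
  apply Rabs_le. lra.
Qed.

Hypotheses (Hmu : forall y, derivable_pt_lim mu y (mu' y))
  (Hode : forall x, improper_integral (fun v => mu (v ^ 2 / 2 + phi x)) (1 - ddphi x)).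

(* [mu (w + s) - mu (w + c) = (s - c) mu' (w + xi)] by the mean value theorem. *)
Lemma mu_taylor_estimate V d c s : 0 < d ->
  (forall c s v, m <= c <= M -> m <= s <= M -> Rabs (s - c) < d ->
     Rabs (mu' (v ^ 2 / 2 + s) - mu' (v ^ 2 / 2 + c)) <= 32 * C / (V * V + v * v)) ->
  m <= c <= M -> m <= s <= M -> Rabs (s - c) < d -> forall v,
  Rabs (mu (v ^ 2 / 2 + s) - mu (v ^ 2 / 2 + c) - (s - c) * mu' (v ^ 2 / 2 + c))
    <= Rabs (s - c) * (32 * C) / (V * V + v * v).
Proof.
  intros Hd Hpt Hc Hs Hsc v.
  destruct (MVT_between mu mu' Hmu (v ^ 2 / 2 + c) (v ^ 2 / 2 + s)) as [xi [Hxi Exi]].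
  rewrite Exi. set (t := xi - v ^ 2 / 2). replace xi with (v ^ 2 / 2 + t) by (unfold t; ring).
  replace (mu' (v ^ 2 / 2 + t) * (v ^ 2 / 2 + s - (v ^ 2 / 2 + c)) - (s - c) * mu' (v ^ 2 / 2 + c))
    with ((s - c) * (mu' (v ^ 2 / 2 + t) - mu' (v ^ 2 / 2 + c))) by ring.
  unfold Rdiv. rewrite Rabs_mult, Rmult_assoc. apply Rmult_le_compat_l; [apply Rabs_pos|].
  assert (Ht : Rmin c s <= t <= Rmax c s).
  { unfold t, Rmin, Rmax in *.
    destruct (Rle_dec (v ^ 2 / 2 + c) (v ^ 2 / 2 + s)), (Rle_dec c s); lra. }
  apply Hpt; [exact Hc | |].
  - unfold Rmin, Rmax in Ht. destruct (Rle_dec c s); lra.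
  - eapply Rle_lt_trans; [|exact Hsc]. unfold Rmin, Rmax in Ht.
    destruct (Rle_dec c s); [rewrite !Rabs_right by lra | rewrite !Rabs_left1 by lra]; lra.
Qed.

Lemma ddphi_increment x eps : 0 < eps -> exists d, 0 < d /\ forall y,
  Rabs (phi y - phi x) < d ->
  Rabs (ddphi y - ddphi x - - q x * (phi y - phi x)) <= eps * Rabs (phi y - phi x).
Proof.
  intros Heps.
  destruct (mu'_shift_modulus eps Heps) as [V [d [HV [Hd [Hle Hpt]]]]].
  exists d. split; [exact Hd|]. intros y Hxy.
  set (c := phi x) in *. set (s := phi y) in *.
  assert (Hmuc : forall y, continuity_pt mu y) by (intro z; exact (derivable_pt_lim_cont _ _ _ (Hmu z))).
  apply Rle_plus_epsilon. intros eta Heta.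
  pose proof (Rabs_pos (s - c)).
  set (e := eta / (2 + Rabs (s - c))).
  assert (He : 0 < e) by (apply Rdiv_lt_0_compat; lra).
  destruct (improper_integral_RInt _ _ (Hode y) e He) as [M1 [HM1 A1]].
  destruct (improper_integral_RInt _ _ (Hode x) e He) as [M2 [HM2 A2]].
  destruct (improper_integral_RInt _ _ (Hq x) e He) as [M3 [HM3 A3]].
  set (b := M1 + M2 + M3).
  destruct (A1 b ltac:(unfold b; lra)) as [E1 B1]. destruct (A2 b ltac:(unfold b; lra)) as [E2 B2].
  destruct (A3 b ltac:(unfold b; lra)) as [E3 B3]. fold s in E1, B1. fold c in E2, B2, E3, B3.
  set (g := fun v => mu (v ^ 2 / 2 + s) - mu (v ^ 2 / 2 + c) - (s - c) * mu' (v ^ 2 / 2 + c)).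
  assert (HI : Rabs (RInt g (- b) b) <= Rabs (s - c) * (32 * C) * PI / V).
  { apply RInt_le_lorentzian; [exact HV | pose proof HC; apply Rmult_le_pos; lra | unfold b; lra | |].
    - intros v. unfold g. apply continuity_pt_minus; [apply continuity_pt_minus|apply continuity_pt_scal];
        apply continuity_pt_v2_shift; assumption.
    - intros v _. apply (mu_taylor_estimate V d); [exact Hd | exact Hpt | apply Hrange | apply Hrange | exact Hxy]. }
  assert (Hg : RInt g (- b) b = RInt (fun v => mu (v ^ 2 / 2 + s)) (- b) b
      - RInt (fun v => mu (v ^ 2 / 2 + c)) (- b) b
      - (s - c) * RInt (fun v => mu' (v ^ 2 / 2 + c)) (- b) b).
  { unfold g. rewrite RInt_Rminus; [| apply ex_RInt_Rminus; assumption | apply ex_RInt_Rscal, E3].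
    rewrite RInt_Rminus by assumption. rewrite RInt_Rscal by exact E3. reflexivity. }
  rewrite Hg in HI.
  assert (Hk : Rabs (s - c) * (32 * C) * PI / V <= eps * Rabs (s - c)).
  { replace (Rabs (s - c) * (32 * C) * PI / V) with (Rabs (s - c) * (32 * C * PI / V))
      by (field; lra). rewrite Rmult_comm. apply Rmult_le_compat_r; [apply Rabs_pos | exact Hle]. }
  set (I3 := RInt (fun v => mu' (v ^ 2 / 2 + c)) (- b) b) in *.
  assert (H3 : Rabs ((s - c) * I3 - (s - c) * q x) <= Rabs (s - c) * e).
  { rewrite <- Rmult_minus_distr_l, Rabs_mult. apply Rmult_le_compat_l; [apply Rabs_pos | lra]. }
  assert (He2 : 2 * e + Rabs (s - c) * e = eta) by (unfold e; field; lra).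
  apply Rabs_lt_between in B1. apply Rabs_lt_between in B2. apply Rabs_le_between in H3.
  apply Rabs_le_between in HI. apply Rabs_le. lra.
Qed.

Variable dphi : R -> R.
Hypothesis Hphi : forall x, derivable_pt_lim phi x (dphi x).

Lemma ddphi_deriv x : derivable_pt_lim ddphi x (- (q x * dphi x)).
Proof.
  apply (derivable_pt_lim_val _ _ (- q x * dphi x)); [|ring].
  exact (derivable_pt_lim_of_increment ddphi phi x (dphi x) (- q x) (Hphi x) (ddphi_increment x)).
Qed.

End VelocityIntegrals.

Lemma q_symmetric (mu' phi q : R -> R) P :
  (forall x, improper_integral (fun v => mu' (v ^ 2 / 2 + phi x)) (q x)) ->
  (forall x, 0 <= x <= P -> phi x = phi (P - x)) -> forall x, 0 <= x <= P -> q (P - x) = q x.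
Proof.
  intros Hq Hsym x Hx.
  apply (improper_integral_unique (fun v => mu' (v ^ 2 / 2 + phi x))); [|apply Hq].
  rewrite (Hsym x Hx). apply Hq.
Qed.

(** * The Dirichlet problem *)

Lemma eigenpair_ode q P lam u du : SL_eigenpair q P lam u du ->
  ode_sol (fun x => q x + lam) 0 P u du /\ u 0 = 0 /\ u P = 0 /\
  exists x, 0 <= x <= P /\ u x <> 0.
Proof.
  intros [[ddu Hd] [H0 [HP Hx]]]. split; [|auto]. intros x Hx'.
  destruct (Hd x Hx') as [D1 [D2 E]]. split; [exact D1|].
  eapply derivable_pt_lim_val; [exact D2 | lra].
Qed.

Lemma ode_eigenpair q P lam u du : ode_sol (fun x => q x + lam) 0 P u du ->
  u 0 = 0 -> u P = 0 -> (exists x, 0 <= x <= P /\ u x <> 0) -> SL_eigenpair q P lam u du.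
Proof.
  intros Hs H0 HP Hx. split; [|auto].
  exists (fun x => - ((q x + lam) * u x)). intros x Hx'.
  destruct (Hs x Hx') as [D1 D2]. repeat split; [exact D1 | exact D2 | ring].
Qed.

Section Dirichlet.
Variables (q : R -> R) (P : R).
Hypotheses (HP : 0 < P) (Hq : forall x, continuity_pt q x).

Lemma shifted_cont lam : forall x, 0 <= x <= P -> continuity_pt (fun x => q x + lam) x.
Proof.
  intros x _. apply continuity_pt_plus; [apply Hq | apply continuity_pt_const; intros ? ?; reflexivity].
Qed.

Lemma eigenfunction_deriv_endpoints lam u du : SL_eigenpair q P lam u du ->
  du 0 <> 0 /\ du P <> 0.
Proof.
  intros He. destruct (eigenpair_ode q P lam u du He) as [Hs [H0 [H1 [x [Hx Hux]]]]].
  split; intro E; apply Hux.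
  - apply (ode_sol_zero _ 0 P u du 0 (shifted_cont lam) Hs); auto. lra.
  - apply (ode_sol_zero _ 0 P u du P (shifted_cont lam) Hs); auto. lra.
Qed.

Lemma eigenvalue_eq_of_nonvanishing lam1 lam2 u1 du1 u2 du2 :
  SL_eigenpair q P lam1 u1 du1 -> SL_eigenpair q P lam2 u2 du2 ->
  (forall x, 0 < x < P -> u1 x <> 0) -> (forall x, 0 < x < P -> u2 x <> 0) -> lam1 = lam2.
Proof.
  intros E1 E2 N1 N2.
  destruct (eigenpair_ode _ _ _ _ _ E1) as [S1 [A1 [B1 _]]].
  destruct (eigenpair_ode _ _ _ _ _ E2) as [S2 [A2 [B2 _]]].
  destruct (Rtotal_order lam1 lam2) as [Hlt|[|Hgt]]; [exfalso | assumption | exfalso].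
  - destruct (sturm_comparison _ _ 0 P u1 du1 u2 du2 HP S1 S2) as [w [Hw Ew]]; auto.
    + intros; lra.
    + exact (N2 w Hw Ew).
  - destruct (sturm_comparison _ _ 0 P u2 du2 u1 du1 HP S2 S1) as [w [Hw Ew]]; auto.
    + intros; lra.
    + exact (N1 w Hw Ew).
Qed.

(* [u (P - x)] solves the same problem, so it is a multiple of [u]; evaluating at [P / 2]
   shows the multiple is 1. *)
Lemma eigenfunction_symmetric lam u du : (forall x, 0 <= x <= P -> q (P - x) = q x) ->
  SL_eigenpair q P lam u du -> u (P / 2) <> 0 ->
  forall x, 0 <= x <= P -> u x = u (P - x) /\ du (P - x) = - du x.
Proof.
  intros Hqs He Hmid.
  destruct (eigenpair_ode _ _ _ _ _ He) as [S [A [B _]]].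
  destruct (eigenfunction_deriv_endpoints lam u du He) as [Hd0 _].
  set (w := fun x => u (P - x)). set (dw := fun x => - du (P - x)).
  assert (Sw : ode_sol (fun x => q x + lam) 0 P w dw).
  { intros x Hx. destruct (S (P - x) ltac:(lra)) as [D1 D2].
    assert (Hl : derivable_pt_lim (fun x => P - x) x (-1)).
    { eapply derivable_pt_lim_val; [apply dlim_minus; [apply derivable_pt_lim_const | apply derivable_pt_lim_id] | ring]. }
    split.
    - eapply derivable_pt_lim_val; [apply (derivable_pt_lim_comp (fun x => P - x) u x _ _ Hl D1) | unfold dw; ring].
    - eapply derivable_pt_lim_val.
      + apply derivable_pt_lim_opp, (derivable_pt_lim_comp (fun x => P - x) du x _ _ Hl D2).
      + unfold w. rewrite Hqs by lra. ring. }
  set (c := dw 0 / du 0).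
  assert (Z := ode_sol_zero _ 0 P _ _ 0 (shifted_cont lam) (ode_sol_lincomb _ 0 P w dw u du c Sw S)
                 ltac:(lra)).
  assert (Z0 : w 0 - c * u 0 = 0) by (unfold w; rewrite Rminus_0_r, A, B; ring).
  assert (Z1 : dw 0 - c * du 0 = 0) by (unfold c; field; exact Hd0).
  specialize (Z Z0 Z1).
  assert (Hc : c = 1).
  { destruct (Z (P / 2) ltac:(lra)) as [E _]. unfold w in E.
    replace (P - P / 2) with (P / 2) in E by field.
    apply (Rmult_eq_reg_r (u (P / 2))); [lra | exact Hmid]. }
  intros x Hx. destruct (Z x Hx) as [E1 E2]. rewrite Hc in E1, E2. unfold w, dw in E1, E2. lra.
Qed.

Definition shoot (lam : R) (u du : R -> R) : Prop :=
  ode_sol (fun x => q x + lam) 0 P u du /\ u 0 = 0 /\ du 0 = 1.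

Lemma shoot_exists lam : exists u du, shoot lam u du.
Proof.
  destruct (ode_exists (fun x => q x + lam) 0 P 0 1) as [u [du [H0 [H1 H]]]]; [|lra|].
  - intros x. apply continuity_pt_plus; [apply Hq | apply continuity_pt_const; intros ? ?; reflexivity].
  - exists u, du. split; [exact H | split; assumption].
Qed.

Lemma shoot_pos_near_zero lam u du : shoot lam u du ->
  exists eta, 0 < eta <= P /\ forall x, 0 <= x <= eta -> 1 / 2 < du x.
Proof.
  intros [S [A B]].
  destruct (cont_pos_near (fun y => du y - 1 / 2) 0) as [al [Hal H]].
  - apply continuity_pt_minus; [apply (ode_sol_cont_deriv _ _ _ _ _ S); lra|].
    apply continuity_pt_const; intros ? ?; reflexivity.
  - rewrite B. lra.
  - exists (Rmin (al / 2) P). split.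
    + split; [apply Rmin_pos; lra | apply Rmin_r].
    + intros x Hx. assert (Rmin (al / 2) P <= al / 2) by apply Rmin_l.
      specialize (H x ltac:(rewrite Rminus_0_r, Rabs_right; lra)). lra.
Qed.

Lemma shoot_close lam1 u1 du1 : shoot lam1 u1 du1 -> forall eps, 0 < eps -> exists d, 0 < d /\
  forall lam2 u2 du2, Rabs (lam2 - lam1) < d -> shoot lam2 u2 du2 ->
  forall x, 0 <= x <= P -> Rabs (u2 x - u1 x) < eps /\ Rabs (du2 x - du1 x) < eps.
Proof.
  intros [S1 [A1 B1]] eps He.
  destruct (bounded_on_segment q 0 P ltac:(lra) (fun x _ => Hq x)) as [Mq [HMq HMqb]].
  destruct (bounded_on_segment u1 0 P ltac:(lra) (ode_sol_cont _ _ _ _ _ S1)) as [B [HB HBb]].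
  set (K0 := Mq + Rabs lam1 + 1).
  set (Kc := B * B * exp ((K0 + 2) * (P - 0))).
  assert (HKc : 0 <= Kc) by (unfold Kc; apply Rmult_le_pos; [nra | left; apply exp_pos]).
  set (d := Rmin 1 (eps * eps / (Kc + 1))).
  assert (Hd : 0 < d) by (unfold d; apply Rmin_pos; [lra | apply Rdiv_lt_0_compat; nra]).
  exists d. split; [exact Hd|]. intros lam2 u2 du2 Hl [S2 [A2 B2]] x Hx.
  assert (Hd1 : d <= 1) by apply Rmin_l.
  assert (Hd2 : d <= eps * eps / (Kc + 1)) by apply Rmin_r.
  assert (HK0 : 0 <= K0) by (unfold K0; pose proof (Rabs_pos lam1); lra).
  pose proof (Rabs_pos (lam2 - lam1)).
  assert (Hclose := ode_sol_close (fun x => q x + lam2) (fun x => q x + lam1) 0 P u2 du2 u1 du1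
    K0 B (Rabs (lam2 - lam1)) S2 S1 ltac:(congruence) ltac:(congruence) HK0).
  assert (H' : (u2 x - u1 x) * (u2 x - u1 x) + (du2 x - du1 x) * (du2 x - du1 x) <= Rabs (lam2 - lam1) * Kc).
  { unfold Kc. rewrite <- Rmult_assoc. apply Hclose; [| exact HBb | lra | | exact Hx].
    - intros y Hy. specialize (HMqb y Hy).
      pose proof (Rabs_triang (q y) lam2). pose proof (Rabs_triang_inv lam2 lam1). unfold K0. lra.
    - intros y Hy. replace (q y + lam2 - (q y + lam1)) with (lam2 - lam1) by ring. lra. }
  assert (Hsm : Rabs (lam2 - lam1) * Kc < eps * eps).
  { apply Rle_lt_trans with (eps * eps / (Kc + 1) * Kc); [apply Rmult_le_compat_r; lra|].
    replace (eps * eps / (Kc + 1) * Kc) with (eps * eps - eps * eps / (Kc + 1)) by (field; lra).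
    assert (0 < eps * eps / (Kc + 1)) by (apply Rdiv_lt_0_compat; nra). lra. }
  assert (0 <= (u2 x - u1 x) * (u2 x - u1 x)) by apply Rle_0_sqr.
  assert (0 <= (du2 x - du1 x) * (du2 x - du1 x)) by apply Rle_0_sqr.
  split; apply Rabs_lt_between; split; nra.
Qed.

(* When [q + lam < 0], both [u du] and [u^2] are nondecreasing, so [u] cannot return to 0. *)
Lemma shoot_nonneg_of_low lam u du : shoot lam u du ->
  (forall x, 0 <= x <= P -> q x + lam < 0) -> forall x, 0 < x < P -> 0 <= u x.
Proof.
  intros [S [A B]] Hneg x1 Hx1. apply Rnot_lt_le; intro Hlt.
  set (h := fun y => u y * du y).
  assert (Hh0 : forall y, 0 <= y <= P -> 0 <= h y).
  { intros y Hy. replace 0 with (h 0) by (unfold h; rewrite A; ring).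
    apply (nondecreasing_of_deriv_nonneg h (fun y => du y * du y + u y * (- ((q y + lam) * u y))) 0 P);
      try lra.
    - intros z Hz. destruct (S z Hz). apply dlim_mult; assumption.
    - intros z Hz. specialize (Hneg z Hz). assert (0 <= u z * u z) by nra. nra. }
  assert (Hsm : forall y z, 0 <= y -> y <= z -> z <= P -> u y * u y <= u z * u z).
  { apply (nondecreasing_of_deriv_nonneg (fun y => u y * u y) (fun y => 2 * h y) 0 P).
    - intros y Hy. destruct (S y Hy).
      eapply derivable_pt_lim_val; [apply dlim_mult; eassumption | unfold h; ring].
    - intros y Hy. specialize (Hh0 y Hy). lra. }
  destruct (S 0 ltac:(lra)) as [D0 _]. rewrite B in D0.
  destruct (deriv_pos_right u 0 1 D0 ltac:(lra)) as [d [Hd Hd2]].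
  destruct (Rmin_half_pos d x1 Hd ltac:(lra)) as [Ht1 Ht2]. set (t := Rmin d x1 / 2) in *.
  specialize (Hd2 t Ht1). rewrite Rplus_0_l, A in Hd2.
  destruct (IVT_strict u t x1 ltac:(lra)) as [z [Hz Ez]];
    [intros c Hc; apply (ode_sol_cont _ _ _ _ _ S); lra | nra |].
  specialize (Hsm t z ltac:(lra) ltac:(lra) ltac:(lra)). rewrite Ez in Hsm. nra.
Qed.

Lemma shoot_pos_right lam u du : shoot lam u du -> exists t, 0 < t <= P /\ 0 < u t.
Proof.
  intros [S [A B]]. destruct (S 0 ltac:(lra)) as [D0 _]. rewrite B in D0.
  destruct (deriv_pos_right u 0 1 D0 ltac:(lra)) as [d [Hd H]].
  destruct (Rmin_half_pos d P Hd HP) as [H1 H2].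
  exists (Rmin d P / 2). split; [lra|]. specialize (H _ H1). rewrite Rplus_0_l, A in H. exact H.
Qed.

(* An interior zero of a nonnegative solution is a double zero. *)
Lemma shoot_pos_of_nonneg lam u du : shoot lam u du ->
  (forall x, 0 < x < P -> 0 <= u x) -> forall x, 0 < x < P -> 0 < u x.
Proof.
  intros [S [A B]] Hnn x Hx. destruct (Rle_lt_or_eq_dec 0 (u x) (Hnn x Hx)) as [|E]; [assumption|].
  exfalso. assert (Hdx : du x = 0).
  { apply (deriv_local_min u x (du x) 0 P); [apply S; lra | exact Hx|].
    intros y Hy. rewrite <- E. apply Hnn, Hy. }
  destruct (ode_sol_zero _ 0 P u du x (shifted_cont lam) S ltac:(lra) (eq_sym E) Hdx 0 ltac:(lra)).
  lra.
Qed.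

(* Near [0] the slope keeps [u] positive; away from [0], closeness to [u0 >= min u0 > 0]. *)
Lemma shoot_pos_stable lam0 u0 du0 : shoot lam0 u0 du0 -> (forall x, 0 < x <= P -> 0 < u0 x) ->
  exists d, 0 < d /\ forall lam u du, Rabs (lam - lam0) < d -> shoot lam u du ->
  forall x, 0 < x < P -> 0 < u x.
Proof.
  intros Hs0 Hpos. pose proof Hs0 as [S0 [A0 B0]].
  destruct (shoot_pos_near_zero _ _ _ Hs0) as [eta [Heta Hslope]].
  destruct (continuity_ab_min u0 eta P ltac:(lra)) as [xm [Hxm1 Hxm2]];
    [intros c Hc; apply (ode_sol_cont _ _ _ _ _ S0); lra|].
  assert (Hm0 : 0 < u0 xm) by (apply Hpos; lra).
  set (e := Rmin (u0 xm / 2) (1 / 4)).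
  assert (He : 0 < e /\ e <= u0 xm / 2 /\ e <= 1 / 4)
    by (unfold e; repeat split; [apply Rmin_pos; lra | apply Rmin_l | apply Rmin_r]).
  destruct (shoot_close _ _ _ Hs0 e ltac:(lra)) as [d [Hd Hd2]].
  exists d. split; [exact Hd|]. intros lam u du Hl Hs x Hx.
  destruct (Rle_or_lt eta x) as [Hxe|Hxe].
  - destruct (Hd2 lam u du Hl Hs x ltac:(lra)) as [Cl _]. apply Rabs_lt_between in Cl.
    specialize (Hxm1 x ltac:(lra)). lra.
  - pose proof Hs as [S [A B]].
    destruct (MVT_cor2 u du 0 x ltac:(lra)) as [xi [Exi Hxi]]; [intros c Hc; apply S; lra|].
    destruct (Hd2 lam u du Hl Hs xi ltac:(lra)) as [_ Cl]. apply Rabs_lt_between in Cl.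
    specialize (Hslope xi ltac:(lra)).
    rewrite A in Exi. assert (0 < du xi * (x - 0)) by (apply Rmult_lt_0_compat; lra). lra.
Qed.

(* The ground state eigenvalue is the infimum of the [lam] with [dips lam]. *)
Definition dips (lam : R) : Prop :=
  lam <= 0 /\ exists u du, shoot lam u du /\ exists x, 0 < x < P /\ u x < 0.

Lemma dips_open lam : dips lam -> exists d, 0 < d /\ forall l, lam - d < l <= lam -> dips l.
Proof.
  intros [Hle [u [du [Hs [x [Hx Hux]]]]]].
  destruct (shoot_close lam u du Hs (- u x) ltac:(lra)) as [d [Hd Hd2]].
  exists d. split; [exact Hd|]. intros l Hl. split; [lra|].
  destruct (shoot_exists l) as [u2 [du2 H2]]. exists u2, du2. split; [exact H2|].
  exists x. split; [exact Hx|].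
  destruct (Hd2 l u2 du2 ltac:(apply Rabs_def1; lra) H2 x ltac:(lra)) as [Cl _].
  apply Rabs_lt_between in Cl. lra.
Qed.

Lemma dips_bounded_below : exists L, forall l, dips l -> L <= l.
Proof.
  destruct (bounded_on_segment q 0 P ltac:(lra) (fun x _ => Hq x)) as [Mq [_ HMq]].
  exists (- (Mq + 1)). intros l [_ [u [du [Hs [x [Hx Hux]]]]]]. apply Rnot_lt_le; intro Hl.
  enough (0 <= u x) by lra.
  apply (shoot_nonneg_of_low l u du Hs); [|exact Hx].
  intros y Hy. specialize (HMq y Hy). apply Rabs_le_between in HMq. lra.
Qed.

Section GroundState.
Variables (w dw : R -> R).
Hypotheses (Hw : ode_sol q 0 P w dw) (Hw0 : w 0 = 0)
  (Hwneg : forall x, 0 < x < P / 2 -> w x < 0) (Hwpos : forall x, P / 2 < x < P -> 0 < w x).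

(* [w] is a multiple of the shooting solution for [lam = 0], and it changes sign. *)
Lemma dips_zero : dips 0.
Proof.
  split; [lra|]. destruct (shoot_exists 0) as [u [du [Hs [A B]]]].
  exists u, du. split; [split; [exact Hs | split; assumption]|].
  set (c := dw 0).
  assert (Hw' : ode_sol (fun x => q x + 0) 0 P w dw) by (apply (ode_sol_ext q); auto; intros; ring).
  assert (Z := ode_sol_zero _ 0 P _ _ 0 (shifted_cont 0) (ode_sol_lincomb _ 0 P w dw u du c Hw' Hs)
                 ltac:(lra) ltac:(cbv beta; rewrite Hw0, A; ring) ltac:(cbv beta; rewrite B; unfold c; ring)).
  assert (E1 : w (P / 4) = c * u (P / 4)) by (destruct (Z (P / 4) ltac:(lra)); lra).
  assert (E2 : w (3 * P / 4) = c * u (3 * P / 4)) by (destruct (Z (3 * P / 4) ltac:(lra)); lra).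
  pose proof (Hwneg (P / 4) ltac:(lra)). pose proof (Hwpos (3 * P / 4) ltac:(lra)).
  destruct (Rlt_or_le 0 c) as [Hc|Hc].
  - exists (P / 4). split; [lra | nra].
  - exists (3 * P / 4). split; [lra | nra].
Qed.

Lemma ground_state_exists : exists lam0 u0 du0, lam0 < 0 /\ SL_eigenpair q P lam0 u0 du0.
Proof.
  destruct dips_bounded_below as [L HL].
  destruct (glb_exists dips L HL (ex_intro _ 0 dips_zero)) as [lam0 [Hlb Hglb]].
  assert (Hnot : ~ dips lam0).
  { intro Hd. destruct (dips_open lam0 Hd) as [d [Hd0 Hd1]].
    specialize (Hlb _ (Hd1 (lam0 - d / 2) ltac:(lra))). lra. }
  assert (Hl0 : lam0 < 0).
  { destruct (dips_open 0 dips_zero) as [d [Hd0 Hd1]].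
    specialize (Hlb _ (Hd1 (- d / 2) ltac:(lra))). lra. }
  destruct (shoot_exists lam0) as [u0 [du0 Hs0]]. pose proof Hs0 as [S0 [A0 B0]].
  assert (Hnn : forall x, 0 < x < P -> 0 <= u0 x).
  { intros x Hx. apply Rnot_lt_le; intro Hlt. apply Hnot.
    split; [lra|]. exists u0, du0. split; [exact Hs0|]. exists x. split; assumption. }
  assert (HuP : u0 P = 0).
  { destruct (Rtotal_order (u0 P) 0) as [Hlt|[|Hgt]]; [exfalso | assumption | exfalso].
    - enough (0 <= u0 P) by lra.
      apply (cont_nonneg_closure u0 0 P P HP ltac:(lra)); [|exact Hnn].
      apply (ode_sol_cont _ _ _ _ _ S0). lra.
    - assert (Hpos : forall x, 0 < x <= P -> 0 < u0 x).
      { intros x Hx. destruct (Req_dec x P) as [->|]; [exact Hgt|].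
        apply (shoot_pos_of_nonneg lam0 u0 du0 Hs0 Hnn). lra. }
      destruct (shoot_pos_stable lam0 u0 du0 Hs0 Hpos) as [d [Hd Hstab]].
      enough (lam0 + d <= lam0) by lra.
      apply Hglb. intros l Hl. pose proof (Hlb l Hl).
      apply Rnot_lt_le; intro Hlt. destruct Hl as [_ [u [du [Hs [x [Hx Hux]]]]]].
      specialize (Hstab l u du ltac:(apply Rabs_def1; lra) Hs x Hx). lra. }
  exists lam0, u0, du0. split; [exact Hl0|].
  apply ode_eigenpair; [exact S0 | exact A0 | exact HuP|].
  destruct (shoot_pos_right lam0 u0 du0 Hs0) as [t [Ht Hut]].
  exists t. split; lra.
Qed.

Lemma neg_eigenfunction_no_interior_zero lam u du : lam < 0 -> SL_eigenpair q P lam u du ->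
  forall x, 0 < x < P -> u x <> 0.
Proof.
  intros Hl He z Hz Euz.
  assert (Hwz : forall x, 0 < x < P -> w x = 0 -> x = P / 2).
  { intros x Hx E. destruct (Rtotal_order x (P / 2)) as [H|[H|H]]; [| exact H |].
    - specialize (Hwneg x ltac:(lra)). lra.
    - specialize (Hwpos x ltac:(lra)). lra. }
  destruct (eigenpair_ode q P lam u du He) as [Hs [H0 [H1 _]]].
  destruct (eigenfunction_deriv_endpoints lam u du He) as [Hd0 HdP].
  assert (Hcu := ode_sol_cont _ _ _ _ _ Hs).
  destruct (simple_zero_isolated u 0 (du 0) (proj1 (Hs 0 ltac:(lra))) H0 Hd0) as [e0 [He0 [Hr0 _]]].
  destruct (simple_zero_isolated u P (du P) (proj1 (Hs P ltac:(lra))) H1 HdP) as [e1 [He1 [_ Hl1]]].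
  destruct (first_zero u 0 z e0 ltac:(lra)) as [z1 [Hz1 [Ez1 Hnz1]]];
    [intros x Hx; apply Hcu; lra | exact Euz | exact He0 | intros x Hx; apply Hr0; lra |].
  destruct (last_zero u z P e1 ltac:(lra)) as [z2 [Hz2 [Ez2 Hnz2]]];
    [intros x Hx; apply Hcu; lra | exact Euz | exact He1 | exact Hl1 |].
  (* [w] must vanish strictly inside both (0, z1) and (z2, P), yet its only interior zero is P/2. *)
  destruct (sturm_comparison (fun x => q x + lam) q 0 z1 u du w dw ltac:(lra)) as [w1 [Hw1 Ew1]];
    [apply (ode_sol_restrict _ 0 P); auto; lra | apply (ode_sol_restrict _ 0 P); auto; lra
    | intros; lra | exact H0 | exact Ez1 | exact Hnz1 |].
  destruct (sturm_comparison (fun x => q x + lam) q z2 P u du w dw ltac:(lra)) as [w2 [Hw2 Ew2]];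
    [apply (ode_sol_restrict _ 0 P); auto; lra | apply (ode_sol_restrict _ 0 P); auto; lra
    | intros; lra | exact Ez2 | exact H1 | exact Hnz2 |].
  apply Hwz in Ew1; [|lra]. apply Hwz in Ew2; [|lra]. lra.
Qed.

Lemma negative_spectrum : exists lam0, lam0 < 0 /\ SL_eigenvalue q P lam0 /\
  forall lam u du, lam < 0 -> SL_eigenpair q P lam u du ->
    lam = lam0 /\ forall x, 0 < x < P -> u x <> 0.
Proof.
  destruct ground_state_exists as [lam0 [u0 [du0 [Hl0 He0]]]].
  exists lam0. split; [exact Hl0|]. split; [exists u0, du0; exact He0|].
  intros lam u du Hlam He.
  assert (Hnz := neg_eigenfunction_no_interior_zero lam u du Hlam He). split; [|exact Hnz].
  exact (eigenvalue_eq_of_nonvanishing lam lam0 u du u0 du0 He He0 Hnz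
           (neg_eigenfunction_no_interior_zero lam0 u0 du0 Hl0 He0)).
Qed.

End GroundState.
End Dirichlet.

(** * The derivative of the profile *)

(* A zero of a one-signed solution inside its interval is a double zero. *)
Lemma ode_sol_neg_of_nonpos Q a b u du c d : (forall x, a <= x <= b -> continuity_pt Q x) ->
  ode_sol Q a b u du -> a <= c -> c < d -> d <= b ->
  (forall x, c < x < d -> u x <= 0) -> (exists y, a <= y <= b /\ u y <> 0) ->
  forall x, c < x < d -> u x < 0.
Proof.
  intros HQ Hs Hac Hcd Hdb Hnp [y [Hy Huy]] x Hx.
  destruct (Rle_lt_or_eq_dec _ _ (Hnp x Hx)) as [|E]; [assumption|]. exfalso. apply Huy.
  assert (Hdu : du x = 0).
  { apply (deriv_local_max u x (du x) c d); [apply Hs; lra | exact Hx|].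
    intros z Hz. rewrite E. apply Hnp, Hz. }
  exact (proj1 (ode_sol_zero Q a b u du x HQ Hs ltac:(lra) E Hdu y Hy)).
Qed.

Section Profile.
Variables (phi dphi ddphi q : R -> R) (P : R).
Hypotheses (HP : 0 < P) (Hq : forall x, continuity_pt q x)
  (Hphi : forall x, derivable_pt_lim phi x (dphi x)) (Hw : ode_sol q 0 P dphi ddphi)
  (Hper : phi P = phi 0) (Hmax : forall x, phi x <= phi 0)
  (Hsym : forall x, 0 <= x <= P -> phi x = phi (P - x))
  (Hdecr : forall x y, 0 <= x -> x < y -> y <= P / 2 -> phi y < phi x).

Lemma phi_increasing x y : P / 2 <= x -> x < y -> y <= P -> phi x < phi y.
Proof. intros H1 H2 H3. rewrite (Hsym x), (Hsym y) by lra. apply Hdecr; lra. Qed.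

Lemma dphi_endpoints : dphi 0 = 0 /\ dphi P = 0.
Proof.
  split.
  - apply (deriv_local_max phi 0 (dphi 0) (-1) 1 (Hphi 0)); [lra | intros; apply Hmax].
  - apply (deriv_local_max phi P (dphi P) (P - 1) (P + 1) (Hphi P));
      [lra | intros; rewrite Hper; apply Hmax].
Qed.

Lemma dphi_nonzero : exists y, 0 <= y <= P /\ dphi y <> 0.
Proof.
  destruct (MVT_cor2 phi dphi 0 (P / 2) ltac:(lra) (fun c _ => Hphi c)) as [xi [E Hxi]].
  exists xi. split; [lra|]. intro Z. rewrite Z in E.
  assert (phi (P / 2) < phi 0) by (apply Hdecr; lra). lra.
Qed.

Lemma dphi_neg : forall x, 0 < x < P / 2 -> dphi x < 0.
Proof.
  apply (ode_sol_neg_of_nonpos q 0 P dphi ddphi); try lra; [intros; apply Hq | exact Hw | | exact dphi_nonzero].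
  intros x Hx. apply (deriv_nonpos_right phi x _ (Hphi x)). exists (P / 2 - x). split; [lra|].
  intros h Hh. left. apply Hdecr; lra.
Qed.

Lemma dphi_pos : forall x, P / 2 < x < P -> 0 < dphi x.
Proof.
  intros x Hx. enough (- dphi x < 0) by lra. revert x Hx.
  apply (ode_sol_neg_of_nonpos q 0 P (fun y => - dphi y) (fun y => - ddphi y) (P / 2) P); try lra;
    [intros; apply Hq | apply ode_sol_opp, Hw | |].
  - intros x Hx. enough (0 <= dphi x) by lra.
    apply (deriv_nonneg_right phi x _ (Hphi x)). exists (P - x). split; [lra|].
    intros h Hh. left. apply phi_increasing; lra.
  - destruct dphi_nonzero as [y [Hy Hdy]]. exists y. split; [exact Hy | lra].
Qed.

End Profile.

Theorem mainTheorem5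
  (mu mu' phi dphi ddphi q : R -> R) (P gamma C : R)
  (* (i) mu is C^1 and nonnegative *)
  (Hmu_der : forall y, derivable_pt_lim mu y (mu' y))
  (Hmu'_cont : forall y, continuity_pt mu' y)
  (Hmu_nonneg : forall y, 0 <= mu y)
  (* (ii) normalization *)
  (Hmu_norm : improper_integral (fun v => mu (v ^ 2 / 2)) 1)
  (* (iii) decay of mu' *)
  (Hgamma : gamma > 1) (HC : C > 0)
  (Hdecay : forall y, Rabs (mu' y) <= C / (1 + abs_rpow y gamma))
  (Hphi_der : forall x, derivable_pt_lim phi x (dphi x))
  (Hdphi_der : forall x, derivable_pt_lim dphi x (ddphi x))
  (Hode : forall x, improper_integral (fun v => mu (v ^ 2 / 2 + phi x)) (1 - ddphi x))
  (* (iv) phi nonconstant with minimal period P, normalized *)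
  (HP : P > 0)
  (Hper : forall x, phi (x + P) = phi x)
  (Hminper : forall T, 0 < T < P -> exists x, phi (x + T) <> phi x)
  (Hmax : forall x, phi x <= phi 0)
  (Hmin : forall x, phi (P / 2) <= phi x)
  (Hsym : forall x, 0 <= x <= P -> phi x = phi (P - x))
  (Hdecr : forall x y, 0 <= x -> x < y -> y <= P / 2 -> phi y < phi x)
  (Hq : forall x, improper_integral (fun v => mu' (v ^ 2 / 2 + phi x)) (q x)) :
  SL_eigenpair q P 0 dphi ddphi /\
  (* ... and it is the second one: exactly one eigenvalue lies below 0 *)
  (exists lam1, lam1 < 0 /\ SL_eigenvalue q P lam1 /\
     forall lam, SL_eigenvalue q P lam -> lam < 0 -> lam = lam1) /\
  (exists lam0, lam0 < 0 /\ SL_eigenvalue q P lam0 /\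
     (forall lam, SL_eigenvalue q P lam -> lam0 <= lam) /\
     forall u0 du0, SL_eigenpair q P lam0 u0 du0 ->
       forall x, 0 <= x <= P ->
         u0 x = u0 (P - x) /\ du0 (P - x) = - du0 x /\
         u0 (P - x) * du0 (P - x) = - (u0 x * du0 x)).
Proof.
  assert (Hrange : forall x, phi (P / 2) <= phi x <= phi 0) by (intro x; split; [apply Hmin | apply Hmax]).
  assert (Hdec := abs_le_inv_of_decay mu' C gamma Hgamma HC Hdecay).
  assert (Hqc := q_continuous mu' phi q C _ _ HC Hmu'_cont Hdec Hrange Hq
                   (fun x => derivable_pt_lim_cont _ _ _ (Hphi_der x))).
  assert (Hw : ode_sol q 0 P dphi ddphi).
  { intros x _. split; [apply Hdphi_der|].
    exact (ddphi_deriv mu mu' phi q ddphi C _ _ HC Hmu'_cont Hdec Hrange Hq Hmu_der Hode dphi Hphi_der x). }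
  assert (HphiP : phi P = phi 0) by (rewrite <- (Hper 0); f_equal; ring).
  destruct (dphi_endpoints phi dphi P Hphi_der HphiP Hmax) as [Hd0 HdP].
  pose proof (dphi_neg phi dphi ddphi q P HP Hqc Hphi_der Hw Hdecr) as Hneg.
  pose proof (dphi_pos phi dphi ddphi q P HP Hqc Hphi_der Hw Hsym Hdecr) as Hpos.
  destruct (negative_spectrum q P HP Hqc dphi ddphi Hw Hd0 Hneg Hpos) as [lam0 [Hl0 [He0 Hspec]]].
  split; [|split].
  - apply ode_eigenpair; [| exact Hd0 | exact HdP | exact (dphi_nonzero phi dphi P HP Hphi_der Hdecr)].
    apply (ode_sol_ext q); [exact Hw | intros; ring].
  - exists lam0. split; [exact Hl0|]. split; [exact He0|].
    intros lam [u [du He]] Hlam. exact (proj1 (Hspec lam u du Hlam He)).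
  - exists lam0. split; [exact Hl0|]. split; [exact He0|]. split.
    + intros lam [u [du He]].
      destruct (Rlt_or_le lam 0) as [H|H]; [rewrite (proj1 (Hspec lam u du H He))|]; lra.
    + intros u0 du0 He x Hx.
      destruct (eigenfunction_symmetric q P HP Hqc lam0 u0 du0 (q_symmetric mu' phi q P Hq Hsym) He
                  (proj2 (Hspec lam0 u0 du0 Hl0 He) (P / 2) ltac:(lra)) x Hx) as [E1 E2].
      split; [exact E1|]. split; [exact E2|]. rewrite <- E1, E2. ring.
Qed.
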